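(* Fix $k\in\{1,2,\dots\}\cup\{\infty\}$. For $a>0$ let $\mathcal{S}_a$ be the $C^k$-structure on $\mathbb{L}$ given by the special minimal atlas of $w_a$. Then: (1) If $a=1$ (so $w_1=\mathrm{id}_{\mathbb{R}}$), there is a group isomorphism $\eta\colon \mathrm{Diff}(\mathcal{S}_1)\to D^k(\mathbb{R},0)\times\mathbb{Z}_2$ (with $\mathbb{Z}_2=\{\pm1\}$) such that for $*\in\{+,-\}$: $\eta(\mathrm{Diff}^{*,\mathrm{fix}}(\mathcal{S}_1))=D^{k,*}(\mathbb{R},0)\times\{1\}$ and $\eta(\mathrm{Diff}^{*,\mathrm{ex}}(\mathcal{S}_1))=D^{k,*}(\mathbb{R},0)\times\{-1\}$. (2) If $a\neq1$, then $\mathrm{Diff}^{+,\mathrm{ex}}(\mathcal{S}_a)=\mathrm{Diff}^{-,\mathrm{fix}}(\mathcal{S}_a)=\varnothing$ and $\mathrm{Diff}(\mathcal{S}_a)=\mathrm{Diff}^{+,\mathrm{fix}}(\mathcal{S}_a)\sqcup\mathrm{Diff}^{-,\mathrm{ex}}(\mathcal{S}_a)$. Moreover there is a group isomorphism $\mathrm{Diff}^{+,\mathrm{fix}}(\mathcal{S}_a)\cong E^{k,+}(\mathbb{R},0)$, and there exists an element $p\in\mathrm{Diff}^{-,\mathrm{ex}}(\mathcal{S}_a)$ of order $2$; hence $\mathrm{Diff}(\mathcal{S}_a)$ splits as a semidirect product $\mathrm{Diff}^{+,\mathrm{fix}}(\mathcal{S}_a)\rtimes\langle p\rangle$, and so is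 isomorphic to some semidirect product $E^{k,+}(\mathbb{R},0)\rtimes\mathbb{Z}_2$. (3) If $a\neq 1$, then $\mathcal{S}_a$ and $\mathcal{S}_{1/a}$ are $C^k$-diffeomorphic; more precisely $\mathrm{Diff}^{+,\mathrm{fix}}(\mathcal{S}_a,\mathcal{S}_{1/a})=\mathrm{Diff}^{-,\mathrm{ex}}(\mathcal{S}_a,\mathcal{S}_{1/a})=\varnothing$, $\mathrm{Diff}(\mathcal{S}_a,\mathcal{S}_{1/a})=\mathrm{Diff}^{+,\mathrm{ex}}(\mathcal{S}_a,\mathcal{S}_{1/a})\sqcup\mathrm{Diff}^{-,\mathrm{fix}}(\mathcal{S}_a,\mathcal{S}_{1/a})$, and for every $h\in\mathrm{Diff}^{-,\mathrm{fix}}(\mathcal{S}_a,\mathcal{S}_{1/a})$ and $g\in\mathrm{Diff}^{+,\mathrm{ex}}(\mathcal{S}_a,\mathcal{S}_{1/a})$ the maps $\kappa\mapsto g^{-1}\circ\kappa$ and $\kappa\mapsto h\circ\kappa$ are bijections $\mathrm{Diff}^{+,\mathrm{ex}}(\mathcal{S}_a,\mathcal{S}_{1/a})\to\mathrm{Diff}^{+,\mathrm{fix}}(\mathcal{S}_a)$ and $\mathrm{Diff}^{+,\mathrm{fix}}(\mathcal{S}_a)\to\mathrm{Diff}^{-,\mathrm{fix}}(\mathcal{S}_a,\mathcal{S}_{1/a})$ respectively. (4) If $a,b>0$ with $a\neq b$ and $a\neq 1/b$, then $\mathrm{Diff}(\mathcal{S}_a,\mathcal{S}_b)=\varnothing$.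 In particular, $\mathbb{L}$ has uncountably many pairwise non-diffeomorphic $C^k$-structures.
   Context: $\mathbb{L}=\mathbb{R}\sqcup\{0'\}$ is the line with two origins: its open sets are the open subsets of $\mathbb{R}$ and the sets $(W\setminus\{0\})\cup\{0'\}$ with $W\subset\mathbb{R}$ open, $0\in W$. Put $U=\mathbb{L}\setminus\{0'\}=\mathbb{R}$, $V=\mathbb{L}\setminus\{0\}$. $C^k$-atlases, $C^k$-structures (equivalence classes of atlases whose union is again a $C^k$-atlas) and $C^k$-diffeomorphisms between structures on $\mathbb{L}$ are defined via charts (homeomorphisms of open subsets of $\mathbb{L}$ onto open subsets of $\mathbb{R}$) as for manifolds. Every homeomorphism of $\mathbb{L}$ either fixes both $0,0'$ or exchanges them, and maps $\mathbb{R}\setminus\{0\}$ onto itself; it preserves (reverses) orientation if its restriction to $\mathbb{R}\setminus\{0\}$ is increasing (decreasing). For structures $\mathcal{S},\mathcal{T}$: $\mathrm{Diff}(\mathcal{S},\mathcal{T})$ is the set of $C^k$-diffeomorphisms $(\mathbb{L},\mathcal{S})\to(\mathbb{L},\mathcal{T})$; $\mathrm{Diff}^{*,\bullet}(\mathcal{S},\mathcal{T})$, $*\in\{+,-\}$, $\bullet\in\{\mathrm{fix},\mathrm{ex}\}$, the subset of those preserving ($+$) / reversing ($-$) orientation and fixing ($\mathrm{fix}$) / exchanging ($\mathrm{ex}$) $0$ and $0'$; $\mathrm{Diff}(\mathcal{S})=\mathrm{Diff}(\mathcal{S},\mathcal{S})$ etc. $H^k(\mathbb{R},0)$: homeomorphisms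 $h$ of $\mathbb{R}$ with $h(0)=0$ restricting to a $C^k$-diffeomorphism of $\mathbb{R}\setminus\{0\}$. $D^k(\mathbb{R},0)$: $C^k$-diffeomorphisms of $\mathbb{R}$ fixing $0$; $D^{k,+}$, $D^{k,-}$ its orientation preserving / reversing elements. $E^{k,+}(\mathbb{R},0)$: orientation preserving $h\in D^k(\mathbb{R},0)$ with $h^{(i)}(0)=0$ for all integers $2\le i\le k$ (all $i\ge2$ if $k=\infty$). Let $\mathrm{id}_U\colon U\to\mathbb{R}$ be the identity and $\mathrm{id}_V\colon V\to\mathbb{R}$ be $\mathrm{id}_V(0')=0$, $\mathrm{id}_V(x)=x$ for $x\ne0'$. For $h\in H^k(\mathbb{R},0)$ the special minimal atlas of $h$ is the $C^k$-atlas $\{(U,\mathrm{id}_U),(V,h\circ\mathrm{id}_V)\}$. For $a>0$, $w_a\in H^k(\mathbb{R},0)$ is $w_a(x)=x$ for $x\le0$ and $w_a(x)=ax$ for $x>0$. *)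

From Stdlib Require Import Reals ZArith.
From Coquelicot Require Import Coquelicot.
Open Scope R_scope.

Inductive reg := Fin (n : nat) | Inf.

Definition valid_reg (k : reg) : Prop :=
  match k with Fin n => (1 <= n)%nat | Inf => True end.

Definition le_reg (i : nat) (k : reg) : Prop :=
  match k with Fin n => (i <= n)%nat | Inf => True end.

Definition CnOn (n : nat) (f : R -> R) (O : R -> Prop) : Prop :=
  forall x, O x ->
    (forall m, (m <= n)%nat -> ex_derive_n f m x) /\
    continuous (Derive_n f n) x.

Definition CkOn (k : reg) (f : R -> R) (O : R -> Prop) : Prop :=
  match k with
  | Fin n => CnOn n f O
  | Inf => forall n, CnOn n f O
  end.

Inductive L := Pt (x : R) | Orig2.   (* Pt 0 = 0, Orig2 = 0' *)

(** id_U on U = L \ {0'}, id_V on V = L \ {0}; both are this map on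
    their respective domains. *)
Definition val (p : L) : R := match p with Pt x => x | Orig2 => 0 end.

(** Quotient topology (the opens listed in the paper form a basis):
    U is open iff its traces on U = R and on V (identified with R) are open. *)
Definition open_L (U : L -> Prop) : Prop :=
  open (fun x : R => U (Pt x)) /\
  open (fun x : R => U (if Req_EM_T x 0 then Orig2 else Pt x)).

Definition continuous_L (f : L -> L) : Prop :=
  forall U, open_L U -> open_L (fun p => U (f p)).

Record chart := mkChart { dom : L -> Prop; cmap : L -> R }.

Definition image (c : chart) (P : L -> Prop) : R -> Prop :=
  fun y => exists p, dom c p /\ P p /\ cmap c p = y.

Definition is_chart (c : chart) : Prop :=
  open_L (dom c) /\
  (forall p q, dom c p -> dom c q -> cmap c p = cmap c q -> p = q) /\
  open (image c (fun _ => True)) /\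
  (forall O : R -> Prop, open O -> open_L (fun p => dom c p /\ O (cmap c p))) /\
  (forall V, open_L V -> (forall p, V p -> dom c p) -> open (image c V)).

Definition compat (k : reg) (c d : chart) : Prop :=
  exists F : R -> R,
    (forall p, dom c p -> dom d p -> cmap d p = F (cmap c p)) /\
    CkOn k F (image c (dom d)).

Definition is_atlas (k : reg) (A : chart -> Prop) : Prop :=
  (forall c, A c -> is_chart c) /\
  (forall p, exists c, A c /\ dom c p) /\
  (forall c d, A c -> A d -> compat k c d).

(** The C^k-structure determined by an atlas, represented by its maximal
    atlas (= union of all atlases in the equivalence class). *)
Definition structure_of (k : reg) (A : chart -> Prop) : chart -> Prop :=
  fun c => is_chart c /\ forall d, A d -> compat k c d /\ compat k d c.

Definition is_structure (k : reg) (S : chart -> Prop) : Prop :=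
  exists A, is_atlas k A /\ forall c, S c <-> structure_of k A c.

Definition Ck_map (k : reg) (S T : chart -> Prop) (f : L -> L) : Prop :=
  continuous_L f /\
  forall c d, S c -> T d ->
    exists F : R -> R,
      (forall p, dom c p -> dom d (f p) -> cmap d (f p) = F (cmap c p)) /\
      CkOn k F (image c (fun p => dom d (f p))).

Definition Diff (k : reg) (S T : chart -> Prop) (f : L -> L) : Prop :=
  exists g : L -> L,
    (forall p, g (f p) = p) /\ (forall p, f (g p) = p) /\
    Ck_map k S T f /\ Ck_map k T S g.

(** orientation (restriction to R \ {0}, which f maps onto itself) *)
Definition orient_pres (f : L -> L) : Prop :=
  forall x y, x <> 0 -> y <> 0 -> x < y -> val (f (Pt x)) < val (f (Pt y)).
Definition orient_rev (f : L -> L) : Prop :=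
  forall x y, x <> 0 -> y <> 0 -> x < y -> val (f (Pt y)) < val (f (Pt x)).

Definition fixes0 (f : L -> L) : Prop := f (Pt 0) = Pt 0 /\ f Orig2 = Orig2.
Definition exch0 (f : L -> L) : Prop := f (Pt 0) = Orig2 /\ f Orig2 = Pt 0.

Inductive sgn := Plus | Minus.
Inductive kind := Fix | Ex.

Definition orient (s : sgn) f :=
  match s with Plus => orient_pres f | Minus => orient_rev f end.
Definition behaviour (b : kind) f :=
  match b with Fix => fixes0 f | Ex => exch0 f end.

Definition DiffSB (k : reg) (S T : chart -> Prop) (s : sgn) (b : kind)
  (f : L -> L) : Prop :=
  Diff k S T f /\ orient s f /\ behaviour b f.

Definition Dk (k : reg) (h : R -> R) : Prop :=
  h 0 = 0 /\
  exists hinv : R -> R,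
    (forall x, hinv (h x) = x) /\ (forall x, h (hinv x) = x) /\
    CkOn k h (fun _ => True) /\ CkOn k hinv (fun _ => True).

Definition Dks (k : reg) (s : sgn) (h : R -> R) : Prop :=
  Dk k h /\
  match s with
  | Plus => forall x y, x < y -> h x < h y
  | Minus => forall x y, x < y -> h y < h x
  end.

Definition Ekp (k : reg) (h : R -> R) : Prop :=
  Dks k Plus h /\
  forall i : nat, (2 <= i)%nat -> le_reg i k -> Derive_n h i 0 = 0.

Definition w (a : R) (x : R) : R := if Rle_dec x 0 then x else a * x.

Definition chartU : chart := mkChart (fun p => p <> Orig2) val.
Definition chartV (h : R -> R) : chart :=
  mkChart (fun p => p <> Pt 0) (fun p => h (val p)).

Definition special_atlas (h : R -> R) : chart -> Prop :=
  fun c => c = chartU \/ c = chartV h.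

Definition Sa (k : reg) (a : R) : chart -> Prop :=
  structure_of k (special_atlas (w a)).

Definition compL (f g : L -> L) : L -> L := fun p => f (g p).
Definition compR (f g : R -> R) : R -> R := fun x => f (g x).

Definition bij_between {A B : Type} (F : A -> B) (P : A -> Prop) (Q : B -> Prop)
  : Prop :=
  (forall x, P x -> Q (F x)) /\
  (forall x y, P x -> P y -> F x = F y -> x = y) /\
  (forall y, Q y -> exists x, P x /\ F x = y).

Definition pm1 (s : Z) : Prop := s = 1%Z \/ s = (-1)%Z.

From Stdlib Require Import Reals ZArith Lia Lra FunctionalExtensionality Classical ClassicalEpsilon.
From Coquelicot Require Import Coquelicot.
Open Scope R_scope.

(* Every homeomorphism f of L is [lift h e]: h = val ∘ f ∘ Pt is a homeomorphism of R fixing 0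
   and the bit e records whether f exchanges the origins. f is a C^k-diffeomorphism
   S_a -> S_b iff its two representatives in the special charts that are defined at 0 are C^k
   ([special_Ck]). On each side of 0 one of them is the other one composed with linear maps of
   slopes among 1, a, 1/a, b; comparing one-sided derivatives at 0 gives a = b when f preserves
   orientation and fixes the origins or reverses it and exchanges them, and a b = 1 in the two
   other cases. For
   a = b <> 1 the same comparison for the higher derivatives forces h^(i)(0) = 0 (i >= 2), and
   conversely such h glue to C^k representatives. The rest is group bookkeeping around the
   orientation reversing involution [flip a] exchanging the origins. *)

Notation full := (fun _ : R => True).

(** * C^n and C^k functions on open subsets of R *)

Lemma Derive_n_Derive (f : R -> R) (m : nat) : Derive_n (Derive f) m = Derive_n f (S m).
Proof.
  apply functional_extensionality; intro x.
  rewrite <- Nat.add_1_r. exact (Derive_n_comp f m 1 x).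
Qed.

Lemma CnOn_locally n (F : R -> R) (O : R -> Prop) :
  (forall x, O x -> exists N G, open N /\ N x /\ CnOn n G N /\ forall y, N y -> F y = G y) ->
  CnOn n F O.
Proof.
  intros H x Ox. destruct (H x Ox) as [N [G [oN [Nx [CG EG]]]]].
  destruct (CG x Nx) as [D C].
  assert (loc : forall y, N y -> locally y (fun t => G t = F t)).
  { intros y Ny. apply (locally_open N); auto. intros; symmetry; auto. }
  split.
  - intros m Hm. apply ex_derive_n_ext_loc with G; auto.
  - apply continuous_ext_loc with (Derive_n G n); auto.
    apply (locally_open N); auto. intros y Ny. apply Derive_n_ext_loc; auto.
Qed.

Lemma CnOn_ext n (F G : R -> R) (O : R -> Prop) :
  open O -> CnOn n G O -> (forall y, O y -> F y = G y) -> CnOn n F O.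
Proof. intros oO CG E. apply CnOn_locally. intros x Ox. exists O, G. auto. Qed.

Lemma CnOn_subset n f (O O' : R -> Prop) :
  (forall x, O' x -> O x) -> CnOn n f O -> CnOn n f O'.
Proof. intros S C x Ox. apply C; auto. Qed.

Lemma CnOn_le m n f O : (m <= n)%nat -> CnOn n f O -> CnOn m f O.
Proof.
  intros Hmn C x Ox. destruct (C x Ox) as [D Cn]. split.
  - intros j Hj. apply D; lia.
  - destruct (Nat.eq_dec m n) as [->|ne]; auto.
    apply (ex_derive_continuous (Derive_n f m)). apply (D (S m)). lia.
Qed.

Lemma CnOn_S_elim n f O :
  CnOn (S n) f O -> (forall x, O x -> ex_derive f x) /\ CnOn n (Derive f) O.
Proof.
  intros C. split.
  - intros x Ox. exact (proj1 (C x Ox) 1%nat ltac:(lia)).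
  - intros x Ox. destruct (C x Ox) as [D Cn]. rewrite Derive_n_Derive. split; auto.
    intros [|m] Hm; simpl; auto. rewrite Derive_n_Derive. apply (D (S (S m))). lia.
Qed.

Lemma CnOn_S_intro n f G (O : R -> Prop) : open O ->
  (forall x, O x -> ex_derive f x) -> CnOn n G O -> (forall x, O x -> Derive f x = G x) ->
  CnOn (S n) f O.
Proof.
  intros oO E C EG. assert (C' : CnOn n (Derive f) O) by (apply CnOn_ext with G; auto).
  intros x Ox. destruct (C' x Ox) as [D Cn]. rewrite Derive_n_Derive in Cn. split; auto.
  intros [|[|m]] Hm; simpl; auto.
  assert (H := D (S m) ltac:(lia)). simpl in H. rewrite Derive_n_Derive in H. exact H.
Qed.

Lemma CnOn_0 f (O : R -> Prop) : (forall x, O x -> continuous f x) -> CnOn 0 f O.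
Proof.
  intros H x Ox. split; auto.
  intros [|m] Hm; simpl; auto; lia.
Qed.

Lemma CnOn_continuous n f (O : R -> Prop) x : CnOn n f O -> O x -> continuous f x.
Proof. intros C Ox. exact (proj2 (CnOn_le 0 n f O ltac:(lia) C x Ox)). Qed.

Lemma CnOn_ex_derive n f (O : R -> Prop) x : CnOn (S n) f O -> O x -> ex_derive f x.
Proof. intros C Ox. exact (proj1 (C x Ox) 1%nat ltac:(lia)). Qed.

Lemma CnOn_const n c (O : R -> Prop) : open O -> CnOn n (fun _ => c) O.
Proof.
  intros oO. revert c. induction n; intros c.
  - apply CnOn_0. intros; apply continuous_const.
  - apply CnOn_S_intro with (fun _ => 0); auto.
    + intros; apply ex_derive_const.
    + intros; apply Derive_const.
Qed.

Lemma CnOn_id n (O : R -> Prop) : open O -> CnOn n (fun x => x) O.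
Proof.
  intros oO. destruct n.
  - apply CnOn_0. intros; apply continuous_id.
  - apply CnOn_S_intro with (fun _ => 1); auto.
    + intros; apply ex_derive_id.
    + apply CnOn_const; auto.
    + intros; apply Derive_id.
Qed.

Lemma CnOn_plus n f g (O : R -> Prop) : open O -> CnOn n f O -> CnOn n g O ->
  CnOn n (fun x => f x + g x) O.
Proof.
  intros oO. revert f g. induction n; intros f g Cf Cg.
  - apply CnOn_0. intros x Ox. apply (continuous_plus f g); eapply CnOn_continuous; eauto.
  - apply CnOn_S_elim in Cf as [Ef Cf]. apply CnOn_S_elim in Cg as [Eg Cg].
    apply CnOn_S_intro with (fun x => Derive f x + Derive g x); auto.
    + intros x Ox. apply (ex_derive_plus f g); auto.
    + intros x Ox. apply Derive_plus; auto.
Qed.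

Lemma CnOn_mult n f g (O : R -> Prop) : open O -> CnOn n f O -> CnOn n g O ->
  CnOn n (fun x => f x * g x) O.
Proof.
  intros oO. revert f g. induction n; intros f g Cf Cg.
  - apply CnOn_0. intros x Ox. apply (continuous_mult f g); eapply CnOn_continuous; eauto.
  - assert (Cf' := CnOn_le n (S n) f O ltac:(lia) Cf).
    assert (Cg' := CnOn_le n (S n) g O ltac:(lia) Cg).
    apply CnOn_S_elim in Cf as [Ef Cf]. apply CnOn_S_elim in Cg as [Eg Cg].
    apply CnOn_S_intro with (fun x => Derive f x * g x + f x * Derive g x); auto.
    + intros x Ox. apply ex_derive_mult; auto.
    + apply CnOn_plus; auto.
    + intros x Ox. apply Derive_mult; auto.
Qed.

Lemma CnOn_scal n c f (O : R -> Prop) : open O -> CnOn n f O -> CnOn n (fun x => c * f x) O.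
Proof. intros oO C. apply (CnOn_mult n (fun _ => c) f); auto. apply CnOn_const; auto. Qed.

Lemma CnOn_comp n g f (O O' : R -> Prop) : open O -> open O' ->
  CnOn n g O' -> CnOn n f O -> (forall x, O x -> O' (f x)) ->
  CnOn n (fun x => g (f x)) O.
Proof.
  intros oO oO'. revert g f. induction n; intros g f Cg Cf M.
  - apply CnOn_0. intros x Ox. apply continuous_comp; eapply CnOn_continuous; eauto.
  - assert (Cf' := CnOn_le n (S n) f O ltac:(lia) Cf).
    apply CnOn_S_elim in Cf as [Ef Cf]. apply CnOn_S_elim in Cg as [Eg Cg].
    apply CnOn_S_intro with (fun x => Derive f x * Derive g (f x)); auto.
    + intros x Ox. apply ex_derive_comp; auto.
    + apply CnOn_mult; auto.
    + intros x Ox. apply Derive_comp; auto.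
Qed.

Lemma CnOn_Rinv n f (O : R -> Prop) : open O -> CnOn n f O -> (forall x, O x -> f x <> 0) ->
  CnOn n (fun x => / f x) O.
Proof.
  intros oO. revert f. induction n; intros f Cf Nz.
  - apply CnOn_0. intros x Ox.
    apply continuous_comp. eapply CnOn_continuous; eauto.
    apply continuity_pt_filterlim, continuity_pt_inv; auto. apply continuity_pt_id.
  - assert (Cf' := CnOn_le n (S n) f O ltac:(lia) Cf).
    apply CnOn_S_elim in Cf as [Ef Cf].
    apply CnOn_S_intro with (fun x => (-1) * (Derive f x * (/ f x * / f x))); auto.
    + intros x Ox. apply ex_derive_inv; auto.
    + apply CnOn_scal; auto. apply CnOn_mult; auto. apply CnOn_mult; auto.
    + intros x Ox. rewrite Derive_inv; auto. field. auto.
Qed.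

Lemma locally_Rabs (x : R) (P : R -> Prop) :
  locally x P <-> exists e, 0 < e /\ forall y, Rabs (y - x) < e -> P y.
Proof.
  split.
  - intros [e H]. exists e. split; [apply cond_pos|]. intros y Hy. apply H. exact Hy.
  - intros [e [He H]]. exists (mkposreal e He). intros y Hy. apply H. exact Hy.
Qed.

Definition side (s : bool) (x : R) : Prop := if s then 0 < x else x < 0.

Lemma open_side s : open (side s).
Proof. destruct s; [apply open_gt|apply open_lt]. Qed.

Lemma locally_side s x : side s x -> locally x (side s).
Proof. intros Hx. apply (locally_open _ _ (open_side s)); auto. Qed.

Lemma continuous_eq_from_side s (A B : R -> R) :
  continuous A 0 -> continuous B 0 -> (forall x, side s x -> A x = B x) -> A 0 = B 0.
Proof.
  intros CA CB E.
  assert (PF : ProperFilter (within (side s) (locally 0))).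
  { destruct s; [exact (at_right_proper_filter 0)|exact (at_left_proper_filter 0)]. }
  apply (@filterlim_locally_unique _ _ _ _ (Proper_StrongProper _ PF) A).
  - exact (filterlim_filter_le_1 _ (filter_le_within _) CA).
  - apply filterlim_ext_loc with B.
    + unfold within. apply filter_forall. intros x Hx. symmetry. apply E, Hx.
    + exact (filterlim_filter_le_1 _ (filter_le_within _) CB).
Qed.

Lemma continuous_Rmult_l (c x : R) : continuous (fun y : R => c * y) x.
Proof. apply continuity_pt_filterlim, continuity_pt_scal, continuity_pt_id. Qed.

Lemma Derive_n_0_from_side s i (W g : R -> R) c r :
  CnOn i W full -> CnOn i g full -> (forall x, side s x -> W x = c * g (r * x)) ->
  Derive_n W i 0 = c * (r ^ i * Derive_n g i 0).
Proof.
  intros CW Cg E. rewrite <- (Rmult_0_r r) at 2.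
  apply (continuous_eq_from_side s (Derive_n W i)
           (fun x => c * (r ^ i * Derive_n g i (r * x)))).
  - apply (CW 0 I).
  - apply (continuous_comp (fun x => Derive_n g i (r * x)) (fun y => c * (r ^ i * y))).
    + apply (continuous_comp (fun x => r * x) (Derive_n g i)).
      apply continuous_Rmult_l. apply (Cg _ I).
    + apply (continuous_comp (fun y => r ^ i * y) (fun y => c * y)); apply continuous_Rmult_l.
  - intros x Hx. rewrite (Derive_n_ext_loc W (fun t => c * g (r * t))).
    + rewrite Derive_n_scal_l, Derive_n_comp_scal; auto.
      apply filter_forall. intros y k Hk. apply (Cg y I). auto.
    + generalize (locally_side s x Hx). apply filter_imp. intros; apply E; auto.
Qed.

Lemma extension_cont0_left (p1 p2 : R -> R) x :
  x < 0 -> locally x (fun y => p1 y = extension_cont p1 p2 0 y).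
Proof.
  intros Hx. generalize (locally_side false x Hx). apply filter_imp. intros y Hy.
  unfold extension_cont. destruct (Rle_dec y 0); simpl in Hy; auto; lra.
Qed.

Lemma extension_cont0_right (p1 p2 : R -> R) x :
  0 < x -> locally x (fun y => p2 y = extension_cont p1 p2 0 y).
Proof.
  intros Hx. generalize (locally_side true x Hx). apply filter_imp. intros y Hy.
  unfold extension_cont. destruct (Rle_dec y 0); simpl in Hy; auto; lra.
Qed.

Lemma continuous_extension_cont0 (p1 p2 : R -> R) x :
  (forall y, continuous p1 y) -> (forall y, continuous p2 y) -> p1 0 = p2 0 ->
  continuous (extension_cont p1 p2 0) x.
Proof.
  intros C1 C2 E. destruct (Rtotal_order x 0) as [Hx|[->|Hx]].
  - apply continuous_ext_loc with p1; auto. apply extension_cont0_left; auto.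
  - apply extension_cont_continuous; auto.
  - apply continuous_ext_loc with p2; auto. apply extension_cont0_right; auto.
Qed.

Lemma is_derive_extension_cont0 (p1 p2 : R -> R) x :
  (forall y, ex_derive p1 y) -> (forall y, ex_derive p2 y) -> p1 0 = p2 0 ->
  Derive p1 0 = Derive p2 0 ->
  is_derive (extension_cont p1 p2 0) x (extension_cont (Derive p1) (Derive p2) 0 x).
Proof.
  intros X1 X2 E DE. unfold extension_cont at 2. destruct (Rtotal_order x 0) as [Hx|[->|Hx]].
  - destruct (Rle_dec x 0); [|lra].
    apply is_derive_ext_loc with p1; [apply extension_cont0_left; auto|apply Derive_correct; auto].
  - destruct (Rle_dec 0 0); [|lra].
    apply extension_cont_is_derive; try apply Derive_correct; auto. rewrite DE. apply Derive_correct; auto.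
  - destruct (Rle_dec x 0); [lra|].
    apply is_derive_ext_loc with p2; [apply extension_cont0_right; auto|apply Derive_correct; auto].
Qed.

Lemma CnOn_glue0 n : forall phi p1 p2,
  CnOn n p1 full -> CnOn n p2 full ->
  (forall i, (i <= n)%nat -> Derive_n p1 i 0 = Derive_n p2 i 0) ->
  (forall x, x <= 0 -> phi x = p1 x) -> (forall x, 0 <= x -> phi x = p2 x) ->
  CnOn n phi full.
Proof.
  induction n as [|n IH]; intros phi p1 p2 C1 C2 Hd E1 E2.
  all: assert (Ephi : forall x, extension_cont p1 p2 0 x = phi x)
    by (intros x; unfold extension_cont; destruct (Rle_dec x 0); [rewrite E1|rewrite E2]; auto; lra).
  - apply CnOn_0. intros x _. apply continuous_ext with (extension_cont p1 p2 0); auto.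
    apply continuous_extension_cont0; try (intros; eapply CnOn_continuous; eauto; exact I).
    exact (Hd 0%nat (le_n _)).
  - set (dphi := extension_cont (Derive p1) (Derive p2) 0).
    assert (Dphi : forall x, is_derive phi x (dphi x)).
    { intros x. apply is_derive_ext with (extension_cont p1 p2 0); auto.
      apply is_derive_extension_cont0; try (intros; eapply CnOn_ex_derive; eauto; exact I).
      - exact (Hd 0%nat ltac:(lia)).
      - exact (Hd 1%nat ltac:(lia)). }
    apply CnOn_S_elim in C1 as [_ C1]. apply CnOn_S_elim in C2 as [_ C2].
    apply CnOn_S_intro with dphi; [apply open_true| | |].
    + intros x _. eexists. apply Dphi.
    + apply (IH _ (Derive p1) (Derive p2)); auto.
      * intros i Hi. rewrite !Derive_n_Derive. apply Hd. lia.
      * intros x Hx. unfold dphi, extension_cont. destruct (Rle_dec x 0); auto; lra.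
      * intros x Hx. unfold dphi, extension_cont. destruct (Rle_dec x 0); auto.
        replace x with 0 by lra. exact (Hd 1%nat ltac:(lia)).
    + intros x _. apply is_derive_unique, Dphi.
Qed.

Lemma is_derive_inverse (W V : R -> R) (y l : R) :
  (forall x, W (V x) = x) -> (forall x, V (W x) = x) -> continuous V y ->
  is_derive W (V y) l -> l <> 0 -> is_derive V y (/ l).
Proof.
  intros WV VW CV D Hl. apply is_derive_Reals in D. apply is_derive_Reals.
  intros eps Heps.
  assert (HA : 0 < Rabs l) by (apply Rabs_pos_lt; auto).
  set (e1 := Rmin (Rabs l / 2) (eps * (Rabs l * Rabs l) / 2)).
  assert (He1 : 0 < e1).
  { apply Rmin_pos. lra. assert (0 < Rabs l * Rabs l) by (apply Rmult_lt_0_compat; auto). nra. }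
  destruct (D e1 He1) as [d1 H1].
  assert (CV' := proj1 (filterlim_locally (F:=locally y) V (V y)) CV d1).
  apply locally_Rabs in CV' as [d [Hd Hc]].
  exists (mkposreal d Hd). intros t Ht0 Ht. simpl in Ht.
  set (hh := V (y + t) - V y).
  assert (Hh0 : hh <> 0).
  { unfold hh. intro E. assert (V (y + t) = V y) by lra.
    assert (W (V (y + t)) = W (V y)) by (rewrite H; auto). rewrite !WV in H0. lra. }
  assert (Hh : Rabs hh < d1).
  { exact (Hc (y + t) ltac:(replace (y + t - y) with t by ring; auto)). }
  specialize (H1 hh Hh0 Hh).
  replace (V y + hh) with (V (y + t)) in H1 by (unfold hh; ring).
  rewrite !WV in H1. replace (y + t - y) with t in H1 by ring.
  set (q := t / hh) in *.
  replace (hh / t) with (/ q) by (unfold q; field; auto).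
  assert (Hq0 : q <> 0).
  { unfold q. apply Rmult_integral_contrapositive_currified; auto. apply Rinv_neq_0_compat; auto. }
  assert (e1a : e1 <= Rabs l / 2) by apply Rmin_l.
  assert (e1b : e1 <= eps * (Rabs l * Rabs l) / 2) by apply Rmin_r.
  assert (Hq : Rabs l / 2 < Rabs q).
  { assert (Rabs l <= Rabs q + Rabs (q - l)).
    { replace l with (q - (q - l)) at 1 by ring. eapply Rle_trans. apply Rabs_triang.
      rewrite Rabs_Ropp. lra. }
    lra. }
  replace (/ q - / l) with ((l - q) / (q * l)) by (field; auto).
  unfold Rdiv. rewrite Rabs_mult, Rabs_inv, Rabs_mult.
  replace (Rabs (l - q)) with (Rabs (q - l)) by (rewrite <- Rabs_Ropp; f_equal; ring).
  assert (0 < Rabs q * Rabs l) by (apply Rmult_lt_0_compat; lra).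
  apply Rmult_lt_reg_r with (Rabs q * Rabs l); auto.
  rewrite Rmult_assoc, Rinv_l by lra. rewrite Rmult_1_r.
  assert (Rabs l / 2 * Rabs l < Rabs q * Rabs l) by (apply Rmult_lt_compat_r; lra).
  nra.
Qed.

Lemma CnOn_inverse n : forall W V, CnOn n W full ->
  (forall x, W (V x) = x) -> (forall x, V (W x) = x) -> (forall x, continuous V x) ->
  (forall x, ex_derive W x) -> (forall x, Derive W x <> 0) -> CnOn n V full.
Proof.
  induction n as [|n IH]; intros W V CW WV VW CV EW NW.
  - apply CnOn_0. auto.
  - assert (CW' := CnOn_le n (S n) W full ltac:(lia) CW).
    apply CnOn_S_elim in CW as [_ CD].
    assert (DV : forall y, is_derive V y (/ Derive W (V y))).
    { intros y. apply is_derive_inverse with W; auto. apply Derive_correct; auto. }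
    apply CnOn_S_intro with (fun y => / Derive W (V y)); [apply open_true| | |].
    + intros y _. eexists; apply DV.
    + apply (CnOn_comp n (fun x => / Derive W x) V full full); try apply open_true.
      * apply CnOn_Rinv; auto. apply open_true.
      * apply (IH W V); auto.
      * intros; exact I.
    + intros y _. apply is_derive_unique, DV.
Qed.

Lemma Derive_neq0_of_left_inverse (F G : R -> R) x :
  ex_derive F x -> ex_derive G (F x) -> (forall y, G (F y) = y) -> Derive F x <> 0.
Proof.
  intros XF XG E. assert (D := Derive_comp G F x XG XF).
  rewrite (Derive_ext (fun y => G (F y)) (fun y => y)), Derive_id in D by auto.
  intro Z. rewrite Z in D. lra.
Qed.

Lemma CkOn_intro k f O : (forall n, le_reg n k -> CnOn n f O) -> CkOn k f O.
Proof. destruct k; simpl; intros H; [apply H; simpl; lia|intros n; apply H; exact I]. Qed.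

Lemma CkOn_elim k f O n : CkOn k f O -> le_reg n k -> CnOn n f O.
Proof. destruct k; simpl; intros H Hn; [apply CnOn_le with n0; auto|apply H]. Qed.

Lemma CkOn_subset k f (O O' : R -> Prop) :
  (forall x, O' x -> O x) -> CkOn k f O -> CkOn k f O'.
Proof.
  intros S C. apply CkOn_intro. intros n Hn. apply CnOn_subset with O; auto.
  apply CkOn_elim with k; auto.
Qed.

Lemma CkOn_full_subset k f (O : R -> Prop) : CkOn k f full -> CkOn k f O.
Proof. apply CkOn_subset. auto. Qed.

Lemma CkOn_ext k f g (O : R -> Prop) :
  open O -> CkOn k g O -> (forall x, O x -> f x = g x) -> CkOn k f O.
Proof.
  intros oO C E. apply CkOn_intro. intros n Hn. apply CnOn_ext with g; auto.
  apply CkOn_elim with k; auto.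
Qed.

Lemma CkOn_ext_full k f g : CkOn k g full -> (forall x, f x = g x) -> CkOn k f full.
Proof. intros C E. apply CkOn_ext with g; auto. apply open_true. Qed.

Lemma CkOn_comp k g f (O O' : R -> Prop) : open O -> open O' ->
  CkOn k g O' -> CkOn k f O -> (forall x, O x -> O' (f x)) -> CkOn k (fun x => g (f x)) O.
Proof.
  intros oO oO' Cg Cf M. apply CkOn_intro. intros n Hn.
  apply CnOn_comp with O'; auto; apply CkOn_elim with k; auto.
Qed.

Lemma CkOn_comp_full k g f : CkOn k g full -> CkOn k f full -> CkOn k (fun x => g (f x)) full.
Proof. intros. apply CkOn_comp with full; auto; apply open_true. Qed.

Lemma CkOn_continuous k f (O : R -> Prop) x : CkOn k f O -> O x -> continuous f x.
Proof.
  intros C Ox. apply (CnOn_continuous 0 f O); auto.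
  apply CkOn_elim with k; auto. destruct k; simpl; auto; lia.
Qed.

Lemma CkOn_C1 k f O : valid_reg k -> CkOn k f O -> CnOn 1 f O.
Proof. intros V C. apply CkOn_elim with k; auto. Qed.

Lemma CkOn_linear k c (O : R -> Prop) : open O -> CkOn k (fun x => c * x) O.
Proof. intros oO. apply CkOn_intro. intros n _. apply CnOn_scal, CnOn_id; auto. Qed.

Lemma CkOn_id k (O : R -> Prop) : open O -> CkOn k (fun x => x) O.
Proof. intros oO. apply CkOn_intro. intros n _. apply CnOn_id; auto. Qed.

Lemma w_le a x : x <= 0 -> w a x = x.
Proof. intros H. unfold w. destruct (Rle_dec x 0); auto; lra. Qed.

Lemma w_ge a x : 0 <= x -> w a x = a * x.
Proof. intros H. unfold w. destruct (Rle_dec x 0); [replace x with 0 by lra; ring|auto]. Qed.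

Lemma w_0 a : w a 0 = 0.
Proof. apply w_le; lra. Qed.

Lemma w_1 x : w 1 x = x.
Proof. unfold w. destruct (Rle_dec x 0); lra. Qed.

Lemma w_neq0 a x : 0 < a -> x <> 0 -> w a x <> 0.
Proof.
  intros Ha Hx. destruct (Rle_dec x 0); [rewrite w_le; auto|].
  rewrite w_ge by lra. apply Rmult_integral_contrapositive_currified; lra.
Qed.

Lemma w_inv_w a x : 0 < a -> w (/ a) (w a x) = x.
Proof.
  intros Ha. destruct (Rle_dec x 0) as [Hx|Hx]; [rewrite (w_le a x Hx), w_le; auto|].
  assert (0 < x) by lra. rewrite (w_ge a x), w_ge by nra. field. lra.
Qed.

Lemma w_w_inv a x : 0 < a -> w a (w (/ a) x) = x.
Proof.
  intros Ha. rewrite <- (Rinv_inv a) at 1. apply w_inv_w. apply Rinv_0_lt_compat; auto.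
Qed.

Lemma w_Ck k a : CkOn k (w a) (fun x => x <> 0).
Proof.
  apply CkOn_intro. intros n _. apply CnOn_locally. intros x Hx.
  destruct (Rtotal_order x 0) as [H|[H|H]]; [|lra|].
  - exists (side false), (fun x => x). split; [apply open_side|split; [auto|split]].
    + apply CnOn_id, open_side.
    + intros y Hy. apply w_le. simpl in Hy. lra.
  - exists (side true), (fun x => a * x). split; [apply open_side|split; [auto|split]].
    + apply CnOn_scal, CnOn_id; apply open_side.
    + intros y Hy. apply w_ge. simpl in Hy. lra.
Qed.

Lemma w_continuous a x : continuous (w a) x.
Proof.
  assert (C : CnOn 0 (w a) full).
  { apply (CnOn_glue0 0 (w a) (fun x => x) (fun x => a * x)).
    - apply CnOn_id, open_true.
    - apply CnOn_scal, CnOn_id; apply open_true.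
    - intros i Hi. replace i with 0%nat by lia. simpl. ring.
    - apply w_le.
    - apply w_ge. }
  apply (CnOn_continuous 0 _ full); auto.
Qed.

(** * The line with two origins and its special atlases *)

Definition ptV (x : R) : L := if Req_EM_T x 0 then Orig2 else Pt x.

Lemma val_ptV x : val (ptV x) = x.
Proof. unfold ptV. destruct (Req_EM_T x 0); simpl; auto. Qed.

Lemma ptV_0 : ptV 0 = Orig2.
Proof. unfold ptV. destruct (Req_EM_T 0 0); auto; lra. Qed.

Lemma ptV_neq0 x : x <> 0 -> ptV x = Pt x.
Proof. unfold ptV. destruct (Req_EM_T x 0); auto; lra. Qed.

Lemma ptV_val p : p <> Pt 0 -> ptV (val p) = p.
Proof.
  destruct p as [x|]; simpl; intros H; [apply ptV_neq0; intros ->; auto|apply ptV_0].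
Qed.

Lemma ptV_neq_Pt0 x : ptV x <> Pt 0.
Proof. unfold ptV. destruct (Req_EM_T x 0); [discriminate|intro E; inversion E; auto]. Qed.

Lemma ptV_eq_Orig2 x : ptV x = Orig2 <-> x = 0.
Proof. split; [intros E; rewrite <- (val_ptV x), E; auto|intros ->; apply ptV_0]. Qed.

Lemma open_L_and U V : open_L U -> open_L V -> open_L (fun p => U p /\ V p).
Proof. intros [U1 U2] [V1 V2]. split; apply (open_and (T:=R_UniformSpace)); auto. Qed.

Lemma open_ball_punctured_center c r (P : R -> Prop) :
  open (fun x => Rabs (x - c) < r /\ (x = c -> P x)).
Proof.
  intros x [Hx Px]. apply locally_Rabs.
  destruct (Req_dec x c) as [->|ne].
  - exists (r - Rabs (c - c)). split; [lra|]. intros y Hy. split; [|intros ->; auto].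
    rewrite Rminus_diag, Rabs_R0 in *. lra.
  - exists (Rmin (r - Rabs (x - c)) (Rabs (x - c))). split.
    + apply Rmin_pos; [lra|apply Rabs_pos_lt; lra].
    + intros y Hy. assert (H1 := Rmin_l (r - Rabs (x - c)) (Rabs (x - c))).
      assert (H2 := Rmin_r (r - Rabs (x - c)) (Rabs (x - c))).
      assert (T : Rabs (y - c) <= Rabs (y - x) + Rabs (x - c)).
      { replace (y - c) with ((y - x) + (x - c)) by ring. apply Rabs_triang. }
      split; [lra|]. intros ->. exfalso. rewrite <- Rabs_Ropp in Hy.
      replace (- (c - x)) with (x - c) in Hy by ring. lra.
Qed.

(* When p is an origin, the other origin is left out. *)
Definition ballL (p : L) (r : R) : L -> Prop :=
  fun q => Rabs (val q - val p) < r /\ (val q = val p -> q = p).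

Lemma open_ballL p r : open_L (ballL p r).
Proof.
  split.
  - apply (open_ball_punctured_center (val p) r (fun x => Pt x = p)).
  - change (open (fun x => ballL p r (ptV x))).
    eapply open_ext; [|apply (open_ball_punctured_center (val p) r (fun x => ptV x = p))].
    intros x. unfold ballL. rewrite val_ptV. tauto.
Qed.

Lemma ballL_center p r : 0 < r -> ballL p r p.
Proof. intros. unfold ballL. rewrite Rminus_diag, Rabs_R0. auto. Qed.

Definition origin_pair (p q : L) : Prop :=
  (p = Pt 0 /\ q = Orig2) \/ (p = Orig2 /\ q = Pt 0).

Lemma origins_inseparable A B :
  open_L A -> open_L B -> A (Pt 0) -> B Orig2 -> exists p, A p /\ B p.
Proof.
  intros [A1 _] [_ B2] HA HB.
  assert (LA := A1 0 HA). assert (LB : locally 0 (fun x => B (ptV x))).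
  { apply B2. change (B (ptV 0)). rewrite ptV_0. auto. }
  apply locally_Rabs in LA as [e1 [He1 H1]]. apply locally_Rabs in LB as [e2 [He2 H2]].
  set (x := Rmin e1 e2 / 2).
  assert (Hm : 0 < Rmin e1 e2) by (apply Rmin_pos; auto).
  assert (Rmin e1 e2 <= e1) by apply Rmin_l. assert (Rmin e1 e2 <= e2) by apply Rmin_r.
  assert (Hx : Rabs (x - 0) = x) by (rewrite Rminus_0_r; apply Rabs_right; unfold x; lra).
  exists (Pt x). split; [apply H1; rewrite Hx; unfold x; lra|].
  rewrite <- (ptV_neq0 x) by (unfold x; lra). apply H2. rewrite Hx; unfold x; lra.
Qed.

Lemma separate_points p q : p <> q -> ~ origin_pair p q ->
  exists A B, open_L A /\ open_L B /\ A p /\ B q /\ forall z, A z -> B z -> False.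
Proof.
  intros ne nbad. destruct (Req_dec (val p) (val q)) as [E|NE].
  - exfalso. destruct p as [x|], q as [y|]; simpl in E; subst; auto.
    + apply nbad; left; auto.
    + apply nbad; right; auto.
  - set (r := Rabs (val p - val q) / 2).
    assert (Hr : 0 < r).
    { unfold r. assert (0 < Rabs (val p - val q)) by (apply Rabs_pos_lt; lra). lra. }
    exists (ballL p r), (ballL q r).
    do 2 (split; [apply open_ballL|]). do 2 (split; [apply ballL_center; auto|]).
    intros z [Hz1 _] [Hz2 _].
    assert (Rabs (val p - val q) <= Rabs (val z - val p) + Rabs (val z - val q)).
    { replace (val p - val q) with (- (val z - val p) + (val z - val q)) by ring.
      eapply Rle_trans; [apply Rabs_triang|]. rewrite Rabs_Ropp. lra. }
    unfold r in *. lra.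
Qed.

Lemma continuous_inj_origin_pair f : continuous_L f -> (forall p q, f p = f q -> p = q) ->
  origin_pair (f (Pt 0)) (f Orig2).
Proof.
  intros Cf If. apply NNPP. intros H.
  assert (ne : f (Pt 0) <> f Orig2) by (intro E; apply If in E; discriminate).
  destruct (separate_points _ _ ne H) as [A [B [oA [oB [HA [HB D]]]]]].
  destruct (origins_inseparable (fun p => A (f p)) (fun p => B (f p))) as [z [Az Bz]]; auto.
  apply (D (f z)); auto.
Qed.

Lemma image_chartU P y : image chartU P y <-> P (Pt y).
Proof.
  unfold image; simpl. split.
  - intros [[x|] [Hp [Pp E]]]; simpl in *; [subst; auto|congruence].
  - intros H. exists (Pt y). split; [discriminate|auto].
Qed.

Lemma image_chartV h hinv P y : (forall x, hinv (h x) = x) -> (forall x, h (hinv x) = x) ->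
  (image (chartV h) P y <-> P (ptV (hinv y))).
Proof.
  intros HK KH. unfold image; simpl. split.
  - intros [p [Hp [Pp E]]]. rewrite <- E, HK, ptV_val; auto.
  - intros H. exists (ptV (hinv y)). split; [apply ptV_neq_Pt0|]. split; auto.
    rewrite val_ptV; auto.
Qed.

Lemma open_preimage (h : R -> R) (O : R -> Prop) :
  (forall x, continuous h x) -> open O -> open (fun x => O (h x)).
Proof. intros C oO. apply open_comp; auto. intros x _. apply C. Qed.

Lemma is_chart_U : is_chart chartU.
Proof.
  split; [|split; [|split; [|split]]]; simpl.
  - split.
    + eapply open_ext; [|apply open_true]. intros x; split; [discriminate|auto].
    + change (open (fun x => ptV x <> Orig2)). eapply open_ext; [|apply (open_neq 0)].
      intros x. rewrite ptV_eq_Orig2. tauto.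
  - intros [x|] [y|] Hp Hq E; simpl in *; congruence.
  - eapply open_ext; [|apply open_true]. intros y. rewrite image_chartU.
    split; auto; discriminate.
  - intros O oO. split.
    + eapply open_ext; [|apply oO]. intros x; simpl. split; [split; [discriminate|auto]|tauto].
    + change (open (fun x => ptV x <> Orig2 /\ O (val (ptV x)))).
      eapply open_ext; [|apply (open_and _ _ (open_neq 0) oO)]. intros x.
      rewrite val_ptV, ptV_eq_Orig2. tauto.
  - intros V [V1 V2] HV. eapply open_ext; [|apply V1]. intros y. rewrite image_chartU. tauto.
Qed.

Lemma is_chart_V (h hinv : R -> R) : (forall x, continuous h x) -> (forall x, continuous hinv x) ->
  (forall x, hinv (h x) = x) -> (forall x, h (hinv x) = x) -> is_chart (chartV h).
Proof.
  intros Ch Ci HK KH. split; [|split; [|split; [|split]]]; simpl.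
  - split.
    + eapply open_ext; [|apply (open_neq 0)].
      intros x. split; intros H E; apply H; [inversion E|subst]; auto.
    + change (open (fun x => ptV x <> Pt 0)). eapply open_ext; [|apply open_true].
      intros x. split; [intros _; apply ptV_neq_Pt0|auto].
  - intros p q Hp Hq E. rewrite <- (ptV_val p), <- (ptV_val q) by auto.
    f_equal. rewrite <- (HK (val p)), <- (HK (val q)). congruence.
  - eapply open_ext; [|apply open_true]. intros y. rewrite (image_chartV h hinv); auto. tauto.
  - intros O oO. split.
    + eapply open_ext; [|apply (open_and _ _ (open_neq 0) (open_preimage h O Ch oO))].
      intros x; simpl. split; intros [H1 H2]; split; auto; [intros E; inversion E; auto|].
      intros ->; auto.
    + change (open (fun x => ptV x <> Pt 0 /\ O (h (val (ptV x))))).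
      eapply open_ext; [|apply (open_preimage h O Ch oO)]. intros x. rewrite val_ptV.
      split; [intros H; split; auto; apply ptV_neq_Pt0|tauto].
  - intros V [V1 V2] HV. eapply open_ext; [|apply (open_preimage hinv _ Ci V2)].
    intros y. rewrite (image_chartV h hinv); auto. tauto.
Qed.

Lemma image_chartV_w a P y : 0 < a -> (image (chartV (w a)) P y <-> P (ptV (w (/ a) y))).
Proof. intros Ha. apply image_chartV; intros; [apply w_inv_w|apply w_w_inv]; auto. Qed.

Lemma is_chart_Vw a : 0 < a -> is_chart (chartV (w a)).
Proof.
  intros Ha. apply is_chart_V with (w (/ a)); try apply w_continuous.
  - intros; apply w_inv_w; auto.
  - intros; apply w_w_inv; auto.
Qed.

Lemma compat_refl k c : compat k c c.
Proof. exists (fun x => x). split; auto. apply CkOn_full_subset, CkOn_id, open_true. Qed.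

Lemma compat_U_Vw k a : compat k chartU (chartV (w a)).
Proof.
  exists (w a). split; auto. apply CkOn_subset with (fun x => x <> 0); [|apply w_Ck].
  intros y Hy. rewrite image_chartU in Hy. simpl in Hy. intros ->. auto.
Qed.

Lemma compat_Vw_U k a : 0 < a -> compat k (chartV (w a)) chartU.
Proof.
  intros Ha. exists (w (/ a)). split.
  - intros p _ _. simpl. rewrite w_inv_w; auto.
  - apply CkOn_subset with (fun x => x <> 0); [|apply w_Ck].
    intros y Hy. rewrite image_chartV_w in Hy by auto; simpl in Hy.
    intros ->. apply Hy. rewrite w_0. apply ptV_0.
Qed.

Lemma special_atlas_w k a : 0 < a -> is_atlas k (special_atlas (w a)).
Proof.
  intros Ha. split; [|split].
  - intros c [->| ->]; [apply is_chart_U|apply is_chart_Vw; auto].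
  - intros [x|].
    + exists chartU. split; [left; auto|simpl; discriminate].
    + exists (chartV (w a)). split; [right; auto|simpl; discriminate].
  - intros c d [->| ->] [->| ->];
      auto using compat_refl, compat_U_Vw, compat_Vw_U.
Qed.

Lemma Sa_chartU k a : 0 < a -> Sa k a chartU.
Proof.
  intros Ha. split; [apply is_chart_U|]. intros d [->| ->];
    auto using compat_refl, compat_U_Vw, compat_Vw_U.
Qed.

Lemma Sa_chartV k a : 0 < a -> Sa k a (chartV (w a)).
Proof.
  intros Ha. split; [apply is_chart_Vw; auto|]. intros d [->| ->];
    auto using compat_refl, compat_U_Vw, compat_Vw_U.
Qed.

Definition Ck_in_charts (k : reg) (c d : chart) (f : L -> L) : Prop :=
  exists F : R -> R,
    (forall p, dom c p -> dom d (f p) -> cmap d (f p) = F (cmap c p)) /\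
    CkOn k F (image c (fun p => dom d (f p))).

Definition chart_inv (c : chart) (y : R) : L :=
  epsilon (inhabits (Pt 0)) (fun p => dom c p /\ cmap c p = y).

Lemma chart_inv_cmap c p : is_chart c -> dom c p -> chart_inv c (cmap c p) = p.
Proof.
  intros [_ [Inj _]] Hp. unfold chart_inv.
  destruct (epsilon_spec (inhabits (Pt 0)) (fun q => dom c q /\ cmap c q = cmap c p))
    as [H1 H2]; [exists p; auto|]. apply Inj; auto.
Qed.

Lemma open_image_chart c V : is_chart c -> open_L V -> open (image c (fun p => dom c p /\ V p)).
Proof.
  intros Hc oV. apply Hc; [|intros p [? _]; auto].
  apply open_L_and; auto. apply Hc.
Qed.

Lemma open_L_preimage_dom f d : continuous_L f -> is_chart d -> open_L (fun p => dom d (f p)).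
Proof. intros Cf Hd. apply (Cf (dom d)), Hd. Qed.

Section Patching.

Variables (k : reg) (A B : chart -> Prop) (f : L -> L).
Hypotheses (chartA : forall c, A c -> is_chart c) (coverA : forall p, exists c, A c /\ dom c p)
  (chartB : forall c, B c -> is_chart c) (coverB : forall p, exists c, B c /\ dom c p)
  (Cf : continuous_L f) (CkAB : forall e e', A e -> B e' -> Ck_in_charts k e e' f).

(* Near each point the map in the charts c, d factors through charts e of A and e' of B:
   c -> e (compatibility), e -> e' (hypothesis), e' -> d (compatibility). *)
Lemma Ck_in_charts_of_atlases c d :
  structure_of k A c -> structure_of k B d -> Ck_in_charts k c d f.
Proof.
  intros [cc Sc] [cd Sd].
  exists (fun y => cmap d (f (chart_inv c y))). split; [intros p Hp _; rewrite chart_inv_cmap; auto|].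
  apply CkOn_intro. intros n Hn. apply CnOn_locally. intros y0 [p0 [Hp0 [Hfp0 Ey0]]].
  destruct (coverA p0) as [e [Ae He]]. destruct (coverB (f p0)) as [e' [Be' He']].
  destruct (Sc e Ae) as [[F1 [EF1 CF1]] _]. destruct (Sd e' Be') as [_ [F3 [EF3 CF3]]].
  destruct (CkAB e e' Ae Be') as [Phi [EPhi CPhi]].
  assert (ce := chartA e Ae). assert (ce' := chartB e' Be').
  set (N := image c (fun p => dom c p /\ (dom e p /\ dom e' (f p) /\ dom d (f p)))).
  set (O2 := image e (fun q => dom e q /\ (dom e' (f q) /\ dom d (f q)))).
  set (O3 := image e' (fun q => dom e' q /\ dom d q)).
  assert (oN : open N).
  { apply open_image_chart; auto.
    repeat apply open_L_and; auto using open_L_preimage_dom; apply ce. }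
  assert (oO2 : open O2).
  { apply open_image_chart; auto. apply open_L_and; auto using open_L_preimage_dom. }
  assert (oO3 : open O3) by (apply open_image_chart; auto; apply cd).
  exists N, (fun y => F3 (Phi (F1 y))). split; [auto|split; [|split]].
  - exists p0. repeat split; auto.
  - apply (CnOn_comp n F3 (fun y => Phi (F1 y)) N O3); auto.
    + apply CnOn_subset with (image e' (dom d)); [|apply CkOn_elim with k; auto].
      intros z [q [Hq [[_ Hq2] Ez]]]. exists q; auto.
    + apply (CnOn_comp n Phi F1 N O2); auto.
      * apply CnOn_subset with (image e (fun p => dom e' (f p))); [|apply CkOn_elim with k; auto].
        intros z [q [Hq [[_ [Hq2 _]] Ez]]]. exists q; auto.
      * apply CnOn_subset with (image c (dom e)); [|apply CkOn_elim with k; auto].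
        intros z [q [Hq [[_ [Hq2 _]] Ez]]]. exists q; auto.
      * intros y [q [Hq [[_ [Hq1 [Hq2 Hq3]]] Ey]]]. subst y.
        rewrite <- EF1 by auto. exists q. repeat split; auto.
    + intros y [q [Hq [[_ [Hq1 [Hq2 Hq3]]] Ey]]]. subst y.
      rewrite <- EF1, <- EPhi by auto. exists (f q). repeat split; auto.
  - intros y [q [Hq [[_ [Hq1 [Hq2 Hq3]]] Ey]]]. subst y.
    rewrite chart_inv_cmap, EF3, EPhi, EF1 by auto. auto.
Qed.

End Patching.

(** * Homeomorphisms of L as lifts *)

(* The map of L acting as h on values; for e = true it swaps the two copies of R, hence the
   two origins. *)
Definition lift (h : R -> R) (e : bool) : L -> L :=
  fun p => match p with
           | Pt x => if e then ptV (h x) else Pt (h x)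
           | Orig2 => if e then Pt (h 0) else ptV (h 0)
           end.

Definition trace (f : L -> L) (x : R) : R := val (f (Pt x)).

Definition exchanges (f : L -> L) : bool :=
  match f (Pt 0) with Orig2 => true | Pt _ => false end.

Definition preserves_nonzero (h : R -> R) : Prop := forall x, x <> 0 -> h x <> 0.

Lemma val_lift h e p : val (lift h e p) = h (val p).
Proof. destruct p, e; simpl; rewrite ?val_ptV; auto. Qed.

Lemma trace_lift h e : trace (lift h e) = h.
Proof. apply functional_extensionality. intros x. apply val_lift. Qed.

Lemma lift_ptV h e z : preserves_nonzero h ->
  lift h e (ptV z) = if e then Pt (h z) else ptV (h z).
Proof.
  intros N. destruct (Req_dec z 0) as [->|ne]; [rewrite ptV_0; destruct e; reflexivity|].
  rewrite ptV_neq0 by auto. simpl.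
  destruct e; [|symmetry]; apply ptV_neq0, N; auto.
Qed.

Lemma lift_Pt0 h e : h 0 = 0 -> lift h e (Pt 0) = if e then Orig2 else Pt 0.
Proof. intros H. simpl. rewrite H. destruct e; auto. apply ptV_0. Qed.

Lemma lift_Orig2 h e : h 0 = 0 -> lift h e Orig2 = if e then Pt 0 else Orig2.
Proof. intros H. simpl. rewrite H. destruct e; auto. apply ptV_0. Qed.

Lemma exchanges_lift h e : h 0 = 0 -> exchanges (lift h e) = e.
Proof. intros H0. unfold exchanges. rewrite lift_Pt0 by auto. destruct e; auto. Qed.

Lemma continuous_lift (h : R -> R) e :
  (forall x, continuous h x) -> preserves_nonzero h -> continuous_L (lift h e).
Proof.
  intros C N U [U1 U2]. split.
  - destruct e; [exact (open_preimage h _ C U2)|exact (open_preimage h _ C U1)].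
  - change (open (fun x => U (lift h e (ptV x)))).
    destruct e.
    + apply (open_ext (fun x => U (Pt (h x)))); [intros x; rewrite lift_ptV; tauto|].
      exact (open_preimage h _ C U1).
    + apply (open_ext (fun x => U (ptV (h x)))); [intros x; rewrite lift_ptV; tauto|].
      exact (open_preimage h _ C U2).
Qed.

Lemma lift_comp h1 e1 h2 e2 : h1 0 = 0 -> h2 0 = 0 -> preserves_nonzero h1 -> preserves_nonzero h2 ->
  compL (lift h1 e1) (lift h2 e2) = lift (fun x => h1 (h2 x)) (xorb e1 e2).
Proof.
  intros H1 H2 N1 N2. apply functional_extensionality. intros [x|]; unfold compL.
  - destruct e1, e2; simpl; rewrite ?lift_ptV by auto; auto.
  - assert (H12 : h1 (h2 0) = 0) by (rewrite H2; auto).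
    rewrite (lift_Orig2 h2 e2 H2), (lift_Orig2 (fun x => h1 (h2 x)) _ H12).
    destruct e1, e2; cbn [xorb]; rewrite ?lift_Pt0, ?lift_Orig2 by auto; auto.
Qed.

Lemma lift_id : lift (fun x => x) false = fun p => p.
Proof. apply functional_extensionality. intros [x|]; auto. apply ptV_0. Qed.

Lemma preserves_nonzero_of_inv h hi : (forall x, hi (h x) = x) -> hi 0 = 0 -> preserves_nonzero h.
Proof. intros HK H0 x Hx E. apply Hx. rewrite <- (HK x), E. auto. Qed.

Lemma lift_inv h hi e : (forall x, hi (h x) = x) -> h 0 = 0 -> preserves_nonzero hi ->
  forall p, lift hi e (lift h e p) = p.
Proof.
  intros HK H0 N p.
  assert (Hi0 : hi 0 = 0) by (rewrite <- H0 at 1; apply HK).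
  assert (Nh : preserves_nonzero h) by (apply preserves_nonzero_of_inv with hi; auto).
  change (compL (lift hi e) (lift h e) p = p).
  rewrite lift_comp by auto. replace (xorb e e) with false by (destruct e; auto).
  replace (fun x => hi (h x)) with (fun x : R => x) by (apply functional_extensionality; auto).
  rewrite lift_id. auto.
Qed.

Lemma lift_trace f : continuous_L f -> (forall p q, f p = f q -> p = q) ->
  f = lift (trace f) (exchanges f).
Proof.
  intros Cf If. assert (B := continuous_inj_origin_pair f Cf If).
  assert (Hx : forall x, x <> 0 -> f (Pt x) = Pt (trace f x) /\ trace f x <> 0).
  { intros x Hx. unfold trace. destruct (f (Pt x)) as [y|] eqn:E.
    - simpl. split; auto. intros ->. destruct B as [[B1 B2]|[B1 B2]].
      + rewrite <- B1 in E. apply If in E. inversion E; auto.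
      + rewrite <- B2 in E. apply If in E. discriminate.
    - exfalso. destruct B as [[B1 B2]|[B1 B2]].
      + rewrite <- B2 in E. apply If in E. discriminate.
      + rewrite <- B1 in E. apply If in E. inversion E; auto. }
  unfold exchanges, trace in *. apply functional_extensionality. intros [x|]; simpl.
  - destruct (Req_dec x 0) as [->|ne].
    + destruct B as [[B1 B2]|[B1 B2]]; rewrite B1; cbn [val]; auto. rewrite ptV_0; auto.
    + destruct (Hx x ne) as [E1 E2].
      destruct (f (Pt 0)); rewrite E1; cbn [val]; auto. rewrite ptV_neq0; auto.
  - destruct B as [[B1 B2]|[B1 B2]]; rewrite B1, B2; cbn [val]; auto. rewrite ptV_0; auto.
Qed.

(* h fixes 0 and the two local representatives of [lift h e] between the special atlases of
   w_a and w_b whose domain contains 0 are C^k; the other two are then C^k off 0. *)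
Definition special_Ck (k : reg) (a b : R) (h : R -> R) (e : bool) : Prop :=
  h 0 = 0 /\
  if e then CkOn k (fun x => w b (h x)) full /\ CkOn k (fun y => h (w (/ a) y)) full
  else CkOn k h full /\ CkOn k (fun y => w b (h (w (/ a) y))) full.

Lemma special_Ck_continuous k a b h e : 0 < b -> special_Ck k a b h e -> forall x, continuous h x.
Proof.
  intros Hb [H0 G] x. destruct e; destruct G as [G1 G2].
  - apply continuous_ext with (fun x => w (/ b) (w b (h x))); [intros; apply w_inv_w; auto|].
    apply (continuous_comp (fun x => w b (h x)) (w (/ b))); [|apply w_continuous].
    apply (CkOn_continuous k _ full); auto.
  - apply (CkOn_continuous k _ full); auto.
Qed.

Lemma CkOn_off0 k F (O : R -> Prop) :
  CkOn k F (fun x => x <> 0) -> (forall y, O y -> y <> 0) -> CkOn k F O.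
Proof. intros C S. apply CkOn_subset with (fun x => x <> 0); auto. Qed.

Lemma CkOn_w_comp k c g : 0 < c -> CkOn k g full -> preserves_nonzero g ->
  CkOn k (fun y => w c (g y)) (fun y => y <> 0).
Proof.
  intros Hc Cg N. apply (CkOn_comp k (w c) g _ (fun x => x <> 0)); auto using open_neq, w_Ck.
  apply CkOn_full_subset; auto.
Qed.

Lemma CkOn_comp_w k c g : CkOn k g full -> CkOn k (fun y => g (w c y)) (fun y => y <> 0).
Proof.
  intros Cg. apply (CkOn_comp k g (w c) _ full); auto using open_neq, open_true, w_Ck.
Qed.

Lemma Ck_in_charts_lift_UU k a b h e : 0 < b -> special_Ck k a b h e -> preserves_nonzero h ->
  Ck_in_charts k chartU chartU (lift h e).
Proof.
  intros Hb [H0 G] N. exists h. split; [intros p _ _; apply val_lift|].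
  destruct e; destruct G as [G1 G2].
  - apply CkOn_off0.
    + apply CkOn_ext with (fun y => w (/ b) (w b (h y))); [apply open_neq| |intros; rewrite w_inv_w; auto].
      apply CkOn_w_comp; [apply Rinv_0_lt_compat; auto|auto|intros x Hx; apply w_neq0; auto].
    + intros y Hy. rewrite image_chartU in Hy. simpl in Hy. intros ->. apply Hy.
      rewrite H0. apply ptV_0.
  - apply CkOn_full_subset; auto.
Qed.

Lemma Ck_in_charts_lift_UV k a b h e : 0 < b -> special_Ck k a b h e -> preserves_nonzero h ->
  Ck_in_charts k chartU (chartV (w b)) (lift h e).
Proof.
  intros Hb [H0 G] N. exists (fun y => w b (h y)). split; [intros p _ _; simpl; rewrite val_lift; auto|].
  destruct e; destruct G as [G1 G2].
  - apply CkOn_full_subset; auto.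
  - apply CkOn_off0; [apply CkOn_w_comp; auto|].
    intros y Hy. rewrite image_chartU in Hy. simpl in Hy. intros ->. apply Hy. rewrite H0. auto.
Qed.

Lemma Ck_in_charts_lift_VU k a b h e : 0 < a -> special_Ck k a b h e -> preserves_nonzero h ->
  Ck_in_charts k (chartV (w a)) chartU (lift h e).
Proof.
  intros Ha [H0 G] N. exists (fun y => h (w (/ a) y)).
  split; [intros p _ _; simpl; rewrite val_lift, w_inv_w; auto|].
  destruct e; destruct G as [G1 G2].
  - apply CkOn_full_subset; auto.
  - apply CkOn_off0; [apply CkOn_comp_w; auto|].
    intros y Hy. rewrite image_chartV_w in Hy by auto. simpl in Hy. intros ->. apply Hy.
    rewrite w_0, ptV_0. simpl. rewrite H0. apply ptV_0.
Qed.

Lemma Ck_in_charts_lift_VV k a b h e : 0 < a -> special_Ck k a b h e -> preserves_nonzero h ->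
  Ck_in_charts k (chartV (w a)) (chartV (w b)) (lift h e).
Proof.
  intros Ha [H0 G] N. exists (fun y => w b (h (w (/ a) y))).
  split; [intros p _ _; simpl; rewrite val_lift, w_inv_w; auto|].
  destruct e; destruct G as [G1 G2].
  - apply CkOn_off0; [apply (CkOn_comp_w k (/ a) (fun x => w b (h x))); auto|].
    intros y Hy. rewrite image_chartV_w in Hy by auto. simpl in Hy. intros ->. apply Hy.
    rewrite w_0, ptV_0. simpl. rewrite H0. auto.
  - apply CkOn_full_subset; auto.
Qed.

Lemma Ck_map_lift k a b h e : 0 < a -> 0 < b -> special_Ck k a b h e -> preserves_nonzero h ->
  Ck_map k (Sa k a) (Sa k b) (lift h e).
Proof.
  intros Ha Hb Hh N.
  destruct (special_atlas_w k a Ha) as [A1 [A2 _]]. destruct (special_atlas_w k b Hb) as [B1 [B2 _]].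
  assert (Cf : continuous_L (lift h e)).
  { apply continuous_lift; auto. apply special_Ck_continuous with k a b e; auto. }
  split; auto. intros c d Sc Sd.
  apply (Ck_in_charts_of_atlases k (special_atlas (w a)) (special_atlas (w b))); auto.
  intros c' d' [->| ->] [->| ->].
  - apply (Ck_in_charts_lift_UU k a b); auto.
  - apply (Ck_in_charts_lift_UV k a b); auto.
  - apply (Ck_in_charts_lift_VU k a b); auto.
  - apply Ck_in_charts_lift_VV; auto.
Qed.

Lemma CkOn_full_of_Ck_in_charts k c d f G : Ck_in_charts k c d f ->
  (forall y, exists p, dom c p /\ dom d (f p) /\ cmap c p = y /\ cmap d (f p) = G y) ->
  CkOn k G full.
Proof.
  intros [F [EF CF]] Hp. apply CkOn_ext_full with F.
  - apply CkOn_subset with (image c (fun p => dom d (f p))); auto.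
    intros y _. destruct (Hp y) as [p [? [? [? _]]]]. exists p. auto.
  - intros y. destruct (Hp y) as [p [? [? [<- <-]]]]. auto.
Qed.

Lemma special_Ck_of_Ck_map k a b h e : 0 < a -> 0 < b -> h 0 = 0 -> preserves_nonzero h ->
  Ck_map k (Sa k a) (Sa k b) (lift h e) -> special_Ck k a b h e.
Proof.
  intros Ha Hb H0 N [_ C].
  assert (VU := C _ _ (Sa_chartV k a Ha) (Sa_chartU k b Hb)).
  assert (VV := C _ _ (Sa_chartV k a Ha) (Sa_chartV k b Hb)).
  assert (UU := C _ _ (Sa_chartU k a Ha) (Sa_chartU k b Hb)).
  assert (UV := C _ _ (Sa_chartU k a Ha) (Sa_chartV k b Hb)).
  assert (Hw : forall y, w a (w (/ a) y) = y) by (intros; apply w_w_inv; auto).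
  split; auto. destruct e; split.
  - apply (CkOn_full_of_Ck_in_charts _ _ _ _ _ UV). intros y. exists (Pt y).
    simpl. rewrite val_ptV. repeat split; [discriminate|apply ptV_neq_Pt0].
  - apply (CkOn_full_of_Ck_in_charts _ _ _ _ _ VU). intros y. exists (ptV (w (/ a) y)).
    rewrite lift_ptV by auto. simpl. rewrite val_ptV.
    repeat split; auto; [apply ptV_neq_Pt0|discriminate].
  - apply (CkOn_full_of_Ck_in_charts _ _ _ _ _ UU). intros y. exists (Pt y).
    simpl. repeat split; discriminate.
  - apply (CkOn_full_of_Ck_in_charts _ _ _ _ _ VV). intros y. exists (ptV (w (/ a) y)).
    rewrite lift_ptV by auto. simpl. rewrite !val_ptV.
    repeat split; auto; apply ptV_neq_Pt0.
Qed.

Definition lift_diffeo (k : reg) (a b : R) (f : L -> L) (h hi : R -> R) (e : bool) : Prop :=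
  f = lift h e /\ (forall x, hi (h x) = x) /\ (forall x, h (hi x) = x) /\
  special_Ck k a b h e /\ special_Ck k b a hi e.

Lemma trace_0 f : continuous_L f -> (forall p q, f p = f q -> p = q) -> trace f 0 = 0.
Proof.
  intros Cf If. unfold trace.
  destruct (continuous_inj_origin_pair f Cf If) as [[-> _]|[-> _]]; auto.
Qed.

Lemma lift_left_inverse h e hi e' : h 0 = 0 -> hi 0 = 0 ->
  (forall p, lift hi e' (lift h e p) = p) -> e' = e /\ forall x, hi (h x) = x.
Proof.
  intros H0 Hi0 Inv. split.
  - assert (E := Inv (Pt 0)). rewrite lift_Pt0 in E by auto.
    destruct e, e'; rewrite ?lift_Pt0, ?lift_Orig2 in E by auto; auto; discriminate.
  - intros x. assert (E := f_equal val (Inv (Pt x))). rewrite !val_lift in E. exact E.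
Qed.

Lemma lift_diffeo_of_Diff k a b f : 0 < a -> 0 < b ->
  Diff k (Sa k a) (Sa k b) f -> exists h hi e, lift_diffeo k a b f h hi e.
Proof.
  intros Ha Hb [g [GF [FG [Cf Cg]]]].
  assert (If : forall p q, f p = f q -> p = q) by (intros p q E; rewrite <- (GF p), <- (GF q), E; auto).
  assert (Ig : forall p q, g p = g q -> p = q) by (intros p q E; rewrite <- (FG p), <- (FG q), E; auto).
  assert (H0 := trace_0 f (proj1 Cf) If). assert (Hi0 := trace_0 g (proj1 Cg) Ig).
  assert (Ef := lift_trace f (proj1 Cf) If). assert (Eg := lift_trace g (proj1 Cg) Ig).
  rewrite Ef, Eg in GF, FG. rewrite Ef in Cf. rewrite Eg in Cg.
  destruct (lift_left_inverse _ _ _ _ H0 Hi0 GF) as [Ee HK].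
  destruct (lift_left_inverse _ _ _ _ Hi0 H0 FG) as [_ KH].
  rewrite Ee in Cg.
  exists (trace f), (trace g), (exchanges f). repeat split; auto.
  - apply special_Ck_of_Ck_map; auto. apply preserves_nonzero_of_inv with (trace g); auto.
  - apply special_Ck_of_Ck_map; auto. apply preserves_nonzero_of_inv with (trace f); auto.
Qed.

Theorem Diff_Sa_iff k a b f : 0 < a -> 0 < b ->
  (Diff k (Sa k a) (Sa k b) f <-> exists h hi e, lift_diffeo k a b f h hi e).
Proof.
  intros Ha Hb. split; [apply lift_diffeo_of_Diff; auto|].
  intros [h [hi [e [-> [HK [KH [G1 G2]]]]]]].
  assert (N1 : preserves_nonzero h) by (apply preserves_nonzero_of_inv with hi; auto; apply G2).
  assert (N2 : preserves_nonzero hi) by (apply preserves_nonzero_of_inv with h; auto; apply G1).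
  exists (lift hi e). split; [|split; [|split]].
  - apply lift_inv; auto. apply G1.
  - apply lift_inv; auto. apply G2.
  - apply Ck_map_lift; auto.
  - apply Ck_map_lift; auto.
Qed.

(** * Orientation and the classes Diff^{s,b} *)

(* Moving (x0, y0) linearly to (x1, y1) keeps x < y, so h x - h y would have to vanish. *)
Lemma continuous_inj_no_sign_change (h : R -> R) x0 x1 y0 y1 : (forall x, continuous h x) ->
  (forall x y, h x = h y -> x = y) -> x0 < y0 -> x1 < y1 ->
  h x0 - h y0 < 0 -> 0 < h x1 - h y1 -> False.
Proof.
  intros C I H0 H1 N P.
  set (path := fun u v t => (1 - t) * u + t * v).
  assert (Cp : forall u v t, continuous (path u v) t).
  { intros u v t. apply (ex_derive_continuous (path u v)). unfold path. auto_derive. auto. }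
  set (g := fun t => h (path x0 x1 t) - h (path y0 y1 t)).
  assert (Cg : continuity g).
  { intros t. apply continuity_pt_filterlim. unfold g.
    apply (continuous_minus (fun t => h (path x0 x1 t)) (fun t => h (path y0 y1 t)));
      apply continuous_comp; auto. }
  assert (g0 : g 0 < 0) by (unfold g, path; rewrite !Rminus_0_r, !Rmult_1_l, !Rmult_0_l, !Rplus_0_r; auto).
  assert (g1 : 0 < g 1) by (unfold g, path; rewrite !Rminus_diag, !Rmult_1_l, !Rmult_0_l, !Rplus_0_l; auto).
  destruct (IVT g 0 1 Cg ltac:(lra) g0 g1) as [z [Hz E]].
  unfold g, path in E. apply Rminus_diag_uniq, I in E.
  destruct (Req_dec z 1) as [->|ne]; [lra|]. assert (0 < 1 - z) by lra. nra.
Qed.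

Lemma continuous_inj_monotone (h : R -> R) : (forall x, continuous h x) ->
  (forall x y, h x = h y -> x = y) -> strict_increasing h \/ strict_decreasing h.
Proof.
  intros C I. destruct (Rtotal_order (h 0) (h 1)) as [Lt|[E|Gt]].
  - left. intros x y Hxy. destruct (Rtotal_order (h x) (h y)) as [?|[E|G]]; auto.
    + apply I in E; lra.
    + exfalso. apply (continuous_inj_no_sign_change h 0 x 1 y); auto; lra.
  - apply I in E. lra.
  - right. intros x y Hxy. destruct (Rtotal_order (h x) (h y)) as [L'|[E|G]]; auto.
    + exfalso. apply (continuous_inj_no_sign_change (fun t => - h t) 0 x 1 y); auto; try lra.
      * intros t. apply (continuous_opp h). auto.
      * intros u v E. apply I. lra.
    + apply I in E; lra.
Qed.

Definition monotone (s : sgn) (h : R -> R) : Prop :=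
  match s with Plus => strict_increasing h | Minus => strict_decreasing h end.

Definition sgn_mul (s1 s2 : sgn) : sgn :=
  match s1, s2 with Plus, Plus | Minus, Minus => Plus | _, _ => Minus end.

Lemma monotone_comp s1 s2 h1 h2 : monotone s1 h1 -> monotone s2 h2 ->
  monotone (sgn_mul s1 s2) (fun x => h2 (h1 x)).
Proof. destruct s1, s2; simpl; intros M1 M2 x y H; auto. Qed.

Lemma monotone_inv s h hi : (forall x, h (hi x) = x) -> monotone s h -> monotone s hi.
Proof.
  intros KH. destruct s; simpl; intros M x y H.
  - destruct (Rtotal_order (hi x) (hi y)) as [?|[E|G]]; auto.
    + apply (f_equal h) in E. rewrite !KH in E. lra.
    + apply M in G. rewrite !KH in G. lra.
  - destruct (Rtotal_order (hi y) (hi x)) as [?|[E|G]]; auto.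
    + apply (f_equal h) in E. rewrite !KH in E. lra.
    + apply M in G. rewrite !KH in G. lra.
Qed.

Lemma orient_lift s h e : strict_increasing h \/ strict_decreasing h ->
  (orient s (lift h e) <-> monotone s h).
Proof.
  intros M. unfold orient, orient_pres, orient_rev, monotone.
  destruct s; split; try (intros M' x y _ _ H; rewrite !val_lift; apply M'; auto).
  all: intros O; destruct M as [M|M]; auto; exfalso.
  all: assert (A := O 1 2 ltac:(lra) ltac:(lra) ltac:(lra)); rewrite !val_lift in A; simpl in A.
  all: assert (B := M 1 2 ltac:(lra)); lra.
Qed.

Definition kind_bit (b : kind) : bool := match b with Fix => false | Ex => true end.

Lemma behaviour_lift b h e : h 0 = 0 -> (behaviour b (lift h e) <-> e = kind_bit b).
Proof.
  intros H0. unfold behaviour, fixes0, exch0. rewrite lift_Pt0, lift_Orig2 by auto.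
  destruct b, e; simpl; split; intros; try tauto; try discriminate; destruct H; discriminate.
Qed.

Lemma lift_diffeo_monotone k a b f h hi e : 0 < b -> lift_diffeo k a b f h hi e ->
  strict_increasing h \/ strict_decreasing h.
Proof.
  intros Hb [_ [HK [_ [G _]]]]. apply continuous_inj_monotone.
  - apply special_Ck_continuous with k a b e; auto.
  - intros x y E. rewrite <- (HK x), <- (HK y), E; auto.
Qed.

Theorem DiffSB_Sa_iff k a b s bk f : 0 < a -> 0 < b ->
  (DiffSB k (Sa k a) (Sa k b) s bk f <->
   exists h hi, lift_diffeo k a b f h hi (kind_bit bk) /\ monotone s h).
Proof.
  intros Ha Hb. split.
  - intros [D [O B]]. apply Diff_Sa_iff in D as [h [hi [e C]]]; auto.
    assert (M := lift_diffeo_monotone _ _ _ _ _ _ _ Hb C).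
    destruct C as [Ef RC]. subst f.
    apply behaviour_lift in B; [subst e|apply RC].
    exists h, hi. split; [split; auto|apply (orient_lift s h (kind_bit bk) M); auto].
  - intros [h [hi [C Ms]]]. assert (M := lift_diffeo_monotone _ _ _ _ _ _ _ Hb C).
    split; [apply Diff_Sa_iff; auto; exists h, hi, (kind_bit bk); auto|].
    destruct C as [-> RC]. split; [apply orient_lift; auto|apply behaviour_lift; auto; apply RC].
Qed.

Lemma Diff_DiffSB k a b f : 0 < a -> 0 < b -> Diff k (Sa k a) (Sa k b) f ->
  exists s bk, DiffSB k (Sa k a) (Sa k b) s bk f.
Proof.
  intros Ha Hb D. apply Diff_Sa_iff in D as [h [hi [e C]]]; auto.
  assert (M := lift_diffeo_monotone _ _ _ _ _ _ _ Hb C).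
  destruct M as [M|M]; [exists Plus|exists Minus]; exists (if e then Ex else Fix);
    apply DiffSB_Sa_iff; auto; exists h, hi; destruct e; auto.
Qed.

Lemma special_Ck_comp k a b c h e h' e' : 0 < b ->
  special_Ck k a b h e -> special_Ck k b c h' e' ->
  special_Ck k a c (fun x => h' (h x)) (xorb e' e).
Proof.
  intros Hb [H0 G] [H0' G']. split; [rewrite H0; auto|].
  assert (Ww : forall y, w (/ b) (w b y) = y) by (intros; apply w_inv_w; auto).
  destruct e, e'; destruct G as [G1 G2]; destruct G' as [G1' G2']; simpl; split.
  - apply CkOn_ext_full with (fun x => h' (w (/ b) (w b (h x)))); [|intros; rewrite Ww; auto].
    apply (CkOn_comp_full k (fun y => h' (w (/ b) y))); auto.
  - apply (CkOn_comp_full k (fun x => w c (h' x)) (fun y => h (w (/ a) y))); auto.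
  - apply CkOn_ext_full with (fun x => w c (h' (w (/ b) (w b (h x))))); [|intros; rewrite Ww; auto].
    apply (CkOn_comp_full k (fun y => w c (h' (w (/ b) y)))); auto.
  - apply (CkOn_comp_full k h' (fun y => h (w (/ a) y))); auto.
  - apply (CkOn_comp_full k (fun x => w c (h' x)) h); auto.
  - apply CkOn_ext_full with (fun y => h' (w (/ b) (w b (h (w (/ a) y))))); [|intros; rewrite Ww; auto].
    apply (CkOn_comp_full k (fun y => h' (w (/ b) y)) (fun y => w b (h (w (/ a) y)))); auto.
  - apply (CkOn_comp_full k h' h); auto.
  - apply CkOn_ext_full with (fun y => w c (h' (w (/ b) (w b (h (w (/ a) y)))))); [|intros; rewrite Ww; auto].
    apply (CkOn_comp_full k (fun y => w c (h' (w (/ b) y))) (fun y => w b (h (w (/ a) y)))); auto.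
Qed.

Lemma lift_diffeo_preserves_nonzero k a b f h hi e :
  lift_diffeo k a b f h hi e -> preserves_nonzero h /\ preserves_nonzero hi.
Proof.
  intros [_ [HK [KH [[H0 _] [Hi0 _]]]]].
  split; [apply preserves_nonzero_of_inv with hi|apply preserves_nonzero_of_inv with h]; auto.
Qed.

Lemma lift_diffeo_comp k a b c f h hi e g h' hi' e' : 0 < a -> 0 < b -> 0 < c ->
  lift_diffeo k a b f h hi e -> lift_diffeo k b c g h' hi' e' ->
  lift_diffeo k a c (compL g f) (fun x => h' (h x)) (fun x => hi (hi' x)) (xorb e' e).
Proof.
  intros Ha Hb Hc C1 C2.
  destruct (lift_diffeo_preserves_nonzero _ _ _ _ _ _ _ C1) as [N1 _].
  destruct (lift_diffeo_preserves_nonzero _ _ _ _ _ _ _ C2) as [N2 _].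
  destruct C1 as [-> [HK [KH [G Gi]]]]. destruct C2 as [-> [HK' [KH' [G' Gi']]]].
  split; [|split; [|split; [|split]]].
  - apply lift_comp; auto; [apply G'|apply G].
  - intros x. rewrite HK', HK; auto.
  - intros x. rewrite KH, KH'; auto.
  - apply special_Ck_comp with b; auto.
  - replace (xorb e' e) with (xorb e e') by (destruct e, e'; reflexivity).
    apply special_Ck_comp with b; auto.
Qed.

Lemma lift_diffeo_inv k a b f h hi e :
  lift_diffeo k a b f h hi e -> lift_diffeo k b a (lift hi e) hi h e.
Proof. intros [_ [HK [KH [G Gi]]]]. repeat split; auto; apply G || apply Gi. Qed.

Lemma inverse_unique (f g g' : L -> L) :
  (forall p, g (f p) = p) -> (forall p, f (g' p) = p) -> g = g'.
Proof. intros A B. apply functional_extensionality. intros p. rewrite <- (B p) at 1. auto. Qed.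

Definition kind_mul (b1 b2 : kind) : kind :=
  match b1, b2 with Fix, Fix | Ex, Ex => Fix | _, _ => Ex end.

Lemma DiffSB_comp k a b c s1 b1 s2 b2 f g : 0 < a -> 0 < b -> 0 < c ->
  DiffSB k (Sa k a) (Sa k b) s1 b1 f -> DiffSB k (Sa k b) (Sa k c) s2 b2 g ->
  DiffSB k (Sa k a) (Sa k c) (sgn_mul s1 s2) (kind_mul b1 b2) (compL g f).
Proof.
  intros Ha Hb Hc D1 D2. apply DiffSB_Sa_iff in D1 as [h1 [hi1 [C1 M1]]]; auto.
  apply DiffSB_Sa_iff in D2 as [h2 [hi2 [C2 M2]]]; auto.
  apply DiffSB_Sa_iff; auto. exists (fun x => h2 (h1 x)), (fun x => hi1 (hi2 x)). split.
  - replace (kind_bit (kind_mul b1 b2)) with (xorb (kind_bit b2) (kind_bit b1))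
      by (destruct b1, b2; reflexivity).
    apply lift_diffeo_comp with b; auto.
  - apply monotone_comp; auto.
Qed.

Lemma DiffSB_inv k a b s bk f finv : 0 < a -> 0 < b ->
  DiffSB k (Sa k a) (Sa k b) s bk f -> (forall p, finv (f p) = p) -> (forall p, f (finv p) = p) ->
  DiffSB k (Sa k b) (Sa k a) s bk finv.
Proof.
  intros Ha Hb D FI IF. apply DiffSB_Sa_iff in D as [h [hi [C M]]]; auto.
  apply DiffSB_Sa_iff; auto. exists hi, h. split.
  - assert (C' := lift_diffeo_inv _ _ _ _ _ _ _ C).
    replace finv with (lift hi (kind_bit bk)); auto.
    destruct C as [-> [HK [KH [G Gi]]]].
    destruct (lift_diffeo_preserves_nonzero _ _ _ _ _ _ _ C') as [_ N].
    symmetry. apply (inverse_unique (lift h (kind_bit bk))); auto.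
    apply lift_inv; auto. apply (proj1 Gi).
  - destruct C as [_ [_ [KH _]]]. apply monotone_inv with h; auto.
Qed.

Lemma DiffSB_Diff k S T s b f : DiffSB k S T s b f -> Diff k S T f.
Proof. intros [D _]; auto. Qed.

Lemma DiffSB_fix_ex_disjoint k S T s s' f : ~ (DiffSB k S T s Fix f /\ DiffSB k S T s' Ex f).
Proof. intros [[_ [_ [B1 _]]] [_ [_ [B2 _]]]]. rewrite B1 in B2. discriminate. Qed.

(** * One-sided derivatives at 0 *)

Lemma slopes_at_0_eq (W g : R -> R) cl rl cr rr :
  CnOn 1 W full -> CnOn 1 g full -> Derive g 0 <> 0 ->
  (forall x, x < 0 -> W x = cl * g (rl * x)) -> (forall x, 0 < x -> W x = cr * g (rr * x)) ->
  cl * rl = cr * rr.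
Proof.
  intros CW Cg Dg El Er.
  assert (Dl := Derive_n_0_from_side false 1 W g cl rl CW Cg El).
  assert (Dr := Derive_n_0_from_side true 1 W g cr rr CW Cg Er).
  rewrite Dl in Dr. simpl in Dr. apply Rmult_eq_reg_r with (Derive g 0); auto.
  rewrite !Rmult_1_r in Dr. rewrite !Rmult_assoc. exact Dr.
Qed.

Lemma Derive_neq0_of_Ck_left_inverse k (F G : R -> R) x : valid_reg k ->
  CkOn k F full -> CkOn k G full -> (forall y, G (F y) = y) -> Derive F x <> 0.
Proof.
  intros V CF CG E. apply Derive_neq0_of_left_inverse with G; auto.
  - apply (CnOn_ex_derive 0 F full); auto. apply CkOn_C1 with k; auto.
  - apply (CnOn_ex_derive 0 G full); auto. apply CkOn_C1 with k; auto.
Qed.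

Definition scale_relation (s : sgn) (b : kind) (a a' : R) : Prop :=
  match s, b with Plus, Fix | Minus, Ex => a = a' | _, _ => a * a' = 1 end.

Lemma increasing_sign h x : h 0 = 0 -> strict_increasing h ->
  (x < 0 -> h x < 0) /\ (0 < x -> 0 < h x).
Proof. intros H0 M. split; intros; rewrite <- H0; apply M; auto. Qed.

Lemma decreasing_sign h x : h 0 = 0 -> strict_decreasing h ->
  (x < 0 -> 0 < h x) /\ (0 < x -> h x < 0).
Proof. intros H0 M. split; intros; rewrite <- H0; apply M; auto. Qed.

Lemma scale_relation_fix k a b h hi s : valid_reg k -> 0 < a -> 0 < b ->
  special_Ck k a b h false -> special_Ck k b a hi false -> (forall x, hi (h x) = x) ->
  monotone s h -> scale_relation s Fix a b.
Proof.
  intros V Ha Hb [H0 [Ch CW]] [_ [Chi _]] HK M.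
  assert (Dh := Derive_neq0_of_Ck_left_inverse k h hi 0 V Ch Chi HK).
  assert (Slopes := fun cl cr =>
    slopes_at_0_eq _ h cl 1 cr (/ a) (CkOn_C1 _ _ _ V CW) (CkOn_C1 _ _ _ V Ch) Dh).
  assert (Hai : 0 < / a) by (apply Rinv_0_lt_compat; auto).
  assert (Wl : forall x, x < 0 -> w (/ a) x = 1 * x) by (intros; rewrite Rmult_1_l; apply w_le; lra).
  assert (Wr : forall x, 0 < x -> w (/ a) x = / a * x) by (intros; apply w_ge; lra).
  destruct s; simpl in M |- *.
  - assert (E : 1 * 1 = b * / a).
    { apply Slopes; intros x Hx; [rewrite Wl by auto|rewrite Wr by auto].
      - rewrite w_le by (left; rewrite Rmult_1_l; apply (increasing_sign h x H0 M); auto). ring.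
      - apply w_ge. left. apply (increasing_sign h _ H0 M). nra. }
    apply Rmult_eq_reg_r with (/ a); [|apply Rinv_neq_0_compat; lra]. rewrite Rinv_r; lra.
  - assert (E : b * 1 = 1 * / a).
    { apply Slopes; intros x Hx; [rewrite Wl by auto|rewrite Wr by auto].
      - rewrite Rmult_1_l. apply w_ge. left. apply (decreasing_sign h x H0 M); auto.
      - rewrite w_le by (left; apply (decreasing_sign h _ H0 M); nra). ring. }
    rewrite Rmult_1_r, Rmult_1_l in E. rewrite E. field. lra.
Qed.

Lemma scale_relation_ex k a b h hi s : valid_reg k -> 0 < a -> 0 < b ->
  special_Ck k a b h true -> special_Ck k b a hi true -> (forall x, hi (h x) = x) ->
  monotone s h -> scale_relation s Ex a b.
Proof.
  intros V Ha Hb [H0 [CW Cg]] [_ [Chi _]] HK M.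
  assert (Dg : Derive (fun y => h (w (/ a) y)) 0 <> 0).
  { apply Derive_neq0_of_Ck_left_inverse with k (fun x => w a (hi x)); auto.
    intros y. rewrite HK. apply w_w_inv; auto. }
  assert (Slopes := fun cl cr =>
    slopes_at_0_eq _ _ cl 1 cr a (CkOn_C1 _ _ _ V CW) (CkOn_C1 _ _ _ V Cg) Dg).
  assert (Wl : forall x, x < 0 -> x = w (/ a) (1 * x)) by (intros; rewrite Rmult_1_l, w_le; lra).
  assert (Wr : forall x, 0 < x -> x = w (/ a) (a * x)).
  { intros x Hx. rewrite w_ge by nra. field. lra. }
  destruct s; simpl in M |- *.
  - assert (E : 1 * 1 = b * a).
    { apply Slopes; intros x Hx; [rewrite <- (Wl x) by auto|rewrite <- (Wr x) by auto].
      - rewrite w_le by (left; apply (increasing_sign h x H0 M); auto). ring.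
      - apply w_ge. left. apply (increasing_sign h x H0 M); auto. }
    lra.
  - assert (E : b * 1 = 1 * a).
    { apply Slopes; intros x Hx; [rewrite <- (Wl x) by auto|rewrite <- (Wr x) by auto].
      - apply w_ge. left. apply (decreasing_sign h x H0 M); auto.
      - rewrite w_le by (left; apply (decreasing_sign h x H0 M); auto). ring. }
    lra.
Qed.

Theorem DiffSB_scale_relation k a b s bk f : valid_reg k -> 0 < a -> 0 < b ->
  DiffSB k (Sa k a) (Sa k b) s bk f -> scale_relation s bk a b.
Proof.
  intros V Ha Hb D. apply DiffSB_Sa_iff in D as [h [hi [[_ [HK [_ [G Gi]]]] M]]]; auto.
  destruct bk; [apply scale_relation_fix with k h hi|apply scale_relation_ex with k h hi]; auto.
Qed.

Lemma w_conj_nonpos a b h x : 0 < a -> h 0 = 0 -> strict_increasing h -> x <= 0 ->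
  w b (h (w (/ a) x)) = h x.
Proof.
  intros Ha H0 M Hx. rewrite (w_le (/ a) x Hx). apply w_le.
  destruct (Req_dec x 0) as [->|ne]; [rewrite H0; lra|].
  left. apply (increasing_sign h x H0 M). lra.
Qed.

Lemma w_conj_nonneg a b h x : 0 < a -> h 0 = 0 -> strict_increasing h -> 0 <= x ->
  w b (h (w (/ a) x)) = b * h (/ a * x).
Proof.
  intros Ha H0 M Hx. assert (0 < / a) by (apply Rinv_0_lt_compat; auto).
  rewrite (w_ge (/ a) x Hx). apply w_ge.
  destruct (Req_dec x 0) as [->|ne]; [rewrite Rmult_0_r, H0; lra|].
  left. apply (increasing_sign h _ H0 M). nra.
Qed.

Lemma pow_neq1 q j : 0 < q -> q <> 1 -> (1 <= j)%nat -> q ^ j <> 1.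
Proof.
  intros Hq H1 Hj. destruct (Rtotal_order q 1) as [Lt|[E|Gt]].
  - assert (P := pow_lt_1_compat q j ltac:(lra) ltac:(lia)). lra.
  - lra.
  - assert (P := Rlt_pow_R1 q j Gt ltac:(lia)). lra.
Qed.

(* The representative of h in the chart V is h on the left of 0 and a h(x/a) on the right,
   so its i-th derivatives at 0 are h^(i)(0) and a^(1-i) h^(i)(0). *)
Lemma special_Ck_flat k a h : 0 < a -> a <> 1 -> special_Ck k a a h false -> strict_increasing h ->
  forall i, (2 <= i)%nat -> le_reg i k -> Derive_n h i 0 = 0.
Proof.
  intros Ha Ha1 [H0 [G1 G2]] M i Hi Hik.
  assert (Hai : 0 < / a) by (apply Rinv_0_lt_compat; auto).
  assert (Ch := CkOn_elim _ _ _ i G1 Hik). assert (CW := CkOn_elim _ _ _ i G2 Hik).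
  assert (Dl := Derive_n_0_from_side false i _ h 1 1 CW Ch).
  assert (Dr := Derive_n_0_from_side true i _ h a (/ a) CW Ch).
  rewrite Dl in Dr by (intros x Hx; simpl in Hx; rewrite w_conj_nonpos, !Rmult_1_l; auto; lra).
  specialize (Dr ltac:(intros x Hx; simpl in Hx; apply w_conj_nonneg; auto; lra)).
  destruct i as [|j]; [lia|]. rewrite pow1 in Dr.
  assert (Q : a * (/ a) ^ S j = (/ a) ^ j) by (simpl; field; lra).
  assert (N := pow_neq1 (/ a) j Hai
                 ltac:(intro E; apply Ha1; rewrite <- (Rinv_inv a), E; apply Rinv_1) ltac:(lia)).
  assert (E : Derive_n h (S j) 0 * (1 - (/ a) ^ j) = 0).
  { rewrite <- Q. replace (Derive_n h (S j) 0 * (1 - a * (/ a) ^ S j))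
      with (1 * (1 * Derive_n h (S j) 0) - a * ((/ a) ^ S j * Derive_n h (S j) 0)) by ring.
    rewrite Dr. ring. }
  apply Rmult_integral in E as [E|E]; auto. lra.
Qed.

Lemma le_reg_trans i n k : (i <= n)%nat -> le_reg n k -> le_reg i k.
Proof. destruct k; simpl; auto; lia. Qed.

Lemma w_conj_Ck_of_flat k a h : 0 < a -> CkOn k h full -> h 0 = 0 -> strict_increasing h ->
  (forall i, (2 <= i)%nat -> le_reg i k -> Derive_n h i 0 = 0) ->
  CkOn k (fun y => w a (h (w (/ a) y))) full.
Proof.
  intros Ha Ch H0 M Dz. apply CkOn_intro. intros n Hn.
  assert (Chn := CkOn_elim _ _ _ n Ch Hn).
  assert (Hai : 0 < / a) by (apply Rinv_0_lt_compat; auto).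
  apply (CnOn_glue0 n _ h (fun x => a * h (/ a * x))); auto.
  - apply CnOn_scal; [apply open_true|].
    apply (CnOn_comp n h (fun x => / a * x) full full); try apply open_true; auto.
    apply CnOn_scal, CnOn_id; apply open_true.
  - intros i Hi. rewrite Derive_n_scal_l, Derive_n_comp_scal.
    + rewrite Rmult_0_r. destruct i as [|[|i]].
      * simpl. rewrite H0. ring.
      * simpl. field. lra.
      * rewrite Dz; [ring|lia|]. apply le_reg_trans with n; auto.
    + apply filter_forall. intros y m Hm. apply (Chn y I). lia.
  - intros x Hx. apply w_conj_nonpos; auto.
  - intros x Hx. apply w_conj_nonneg; auto.
Qed.

Lemma Derive_w_conj_neq0 k a e einv : valid_reg k -> 0 < a ->
  CkOn k e full -> CkOn k einv full -> (forall x, einv (e x) = x) -> e 0 = 0 ->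
  strict_increasing e -> CnOn 1 (fun y => w a (e (w (/ a) y))) full ->
  forall x, Derive (fun y => w a (e (w (/ a) y))) x <> 0.
Proof.
  intros V Ha Ce Ci HK H0 M CW x.
  assert (De : forall y, Derive e y <> 0) by (intros; apply Derive_neq0_of_Ck_left_inverse with k einv; auto).
  assert (C1e := CkOn_C1 _ _ _ V Ce).
  destruct (Rtotal_order x 0) as [Hx|[->|Hx]].
  - rewrite (Derive_ext_loc _ e); auto.
    generalize (locally_side false x Hx). apply filter_imp. intros t Ht.
    apply w_conj_nonpos; auto. simpl in Ht. lra.
  - change (Derive_n (fun y => w a (e (w (/ a) y))) 1 0 <> 0).
    rewrite (Derive_n_0_from_side false 1 _ e 1 1 CW C1e).
    + rewrite pow_1, !Rmult_1_l. apply De.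
    + intros t Ht. rewrite w_conj_nonpos, !Rmult_1_l; auto. simpl in Ht. lra.
  - change (Derive_n (fun y => w a (e (w (/ a) y))) 1 x <> 0).
    rewrite (Derive_n_ext_loc _ (fun t => a * e (/ a * t))).
    + rewrite Derive_n_scal_l, Derive_n_comp_scal.
      * simpl. assert (Derive e (/ a * x) <> 0) by apply De.
        apply Rmult_integral_contrapositive_currified; [lra|].
        apply Rmult_integral_contrapositive_currified; auto.
        rewrite Rmult_1_r. apply Rinv_neq_0_compat. lra.
      * apply filter_forall. intros y m Hm. apply (C1e y I). auto.
    + generalize (locally_side true x Hx). apply filter_imp. intros t Ht.
      apply w_conj_nonneg; auto. simpl in Ht. lra.
Qed.

Lemma lift_diffeo_of_Ekp k a e : valid_reg k -> 0 < a -> Ekp k e ->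
  exists einv, lift_diffeo k a a (lift e false) e einv false.
Proof.
  intros V Ha [[[H0 [einv [HK [KH [Ce Ci]]]]] M] Dz]. exists einv.
  assert (CW := w_conj_Ck_of_flat k a e Ha Ce H0 M Dz).
  assert (Hi0 : einv 0 = 0) by (rewrite <- H0 at 1; apply HK).
  repeat split; auto.
  apply CkOn_intro. intros n Hn.
  apply (CnOn_inverse n (fun y => w a (e (w (/ a) y)))).
  - apply CkOn_elim with k; auto.
  - intros x. rewrite w_inv_w, KH, w_w_inv; auto.
  - intros x. rewrite w_inv_w, HK, w_w_inv; auto.
  - intros x. apply (continuous_comp (fun y => einv (w (/ a) y)) (w a)); [|apply w_continuous].
    apply (continuous_comp (w (/ a)) einv); [apply w_continuous|].
    apply (CkOn_continuous k einv full); auto.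
  - intros x. apply (CnOn_ex_derive 0 _ full); auto. apply CkOn_C1 with k; auto.
  - apply Derive_w_conj_neq0 with k einv; auto. apply CkOn_C1 with k; auto.
Qed.

(** * The case a = 1 *)

Lemma bij_between_param {I X Y : Type} (m : X -> Y) (P : X -> Prop) (Q : Y -> Prop)
  (D : I -> Prop) (F : I -> X) (G : I -> Y) :
  (forall x, P x <-> exists i, D i /\ x = F i) ->
  (forall y, Q y <-> exists i, D i /\ y = G i) ->
  (forall i, D i -> m (F i) = G i) ->
  (forall i j, D i -> D j -> G i = G j -> F i = F j) ->
  bij_between m P Q.
Proof.
  intros HP HQ Hm Hinj. split; [|split].
  - intros x Px. apply HP in Px as [i [Di ->]]. apply HQ. exists i. auto.
  - intros x y Px Py E. apply HP in Px as [i [Di ->]]. apply HP in Py as [j [Dj ->]].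
    rewrite !Hm in E by auto. auto.
  - intros y Qy. apply HQ in Qy as [i [Di ->]]. exists (F i). split; auto. apply HP. eauto.
Qed.

Lemma bij_between_compL (u v : L -> L) (P Q : (L -> L) -> Prop) :
  (forall p, v (u p) = p) -> (forall p, u (v p) = p) ->
  (forall x, P x -> Q (compL u x)) -> (forall y, Q y -> P (compL v y)) ->
  bij_between (compL u) P Q.
Proof.
  intros VU UV PQ QP. split; [auto|split].
  - intros x y _ _ E. apply functional_extensionality. intros p.
    rewrite <- (VU (x p)), <- (VU (y p)). exact (f_equal (fun F => v (F p)) E).
  - intros y Qy. exists (compL v y). split; auto.
    apply functional_extensionality. intros p. apply UV.
Qed.

Definition sgnZ (e : bool) : Z := if e then (-1)%Z else 1%Z.

Lemma sgnZ_inj e1 e2 : sgnZ e1 = sgnZ e2 -> e1 = e2.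
Proof. destruct e1, e2; simpl; auto; discriminate. Qed.

Lemma pm1_sgnZ s : pm1 s <-> exists e, s = sgnZ e.
Proof.
  split; [intros [-> | ->]; [exists false|exists true]; auto|].
  intros [[|] ->]; [right|left]; auto.
Qed.

Lemma sgnZ_xorb e1 e2 : sgnZ (xorb e1 e2) = (sgnZ e1 * sgnZ e2)%Z.
Proof. destruct e1, e2; reflexivity. Qed.

Lemma special_Ck_1 k h e : special_Ck k 1 1 h e <-> h 0 = 0 /\ CkOn k h full.
Proof.
  unfold special_Ck. rewrite Rinv_1.
  replace (w 1) with (fun x : R => x) by (apply functional_extensionality; intros; rewrite w_1; auto).
  destruct e; tauto.
Qed.

Lemma Dk_0 k h : Dk k h -> h 0 = 0.
Proof. intros [H0 _]. exact H0. Qed.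

Lemma Dk_preserves_nonzero k h : Dk k h -> preserves_nonzero h.
Proof.
  intros [H0 [hinv [HK _]]]. apply preserves_nonzero_of_inv with hinv; auto.
  rewrite <- H0 at 1. apply HK.
Qed.

Lemma lift_diffeo_1_iff k f h e :
  (exists hi, lift_diffeo k 1 1 f h hi e) <-> Dk k h /\ f = lift h e.
Proof.
  unfold lift_diffeo. setoid_rewrite special_Ck_1. split.
  - intros [hi [E [HK [KH [[H0 Ch] [_ Chi]]]]]]. split; [split; [|exists hi]|]; auto.
  - intros [[H0 [hi [HK [KH [Ch Chi]]]]] E]. exists hi. repeat split; auto.
    rewrite <- H0 at 1. apply HK.
Qed.

Lemma Diff_1_iff k f : Diff k (Sa k 1) (Sa k 1) f <-> exists h e, Dk k h /\ f = lift h e.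
Proof.
  rewrite Diff_Sa_iff by lra. split.
  - intros [h [hi [e C]]]. exists h, e. apply lift_diffeo_1_iff. eauto.
  - intros [h [e C]]. apply lift_diffeo_1_iff in C as [hi C]. eauto.
Qed.

Lemma DiffSB_1_iff k s bk f :
  DiffSB k (Sa k 1) (Sa k 1) s bk f <-> exists h, Dks k s h /\ f = lift h (kind_bit bk).
Proof.
  rewrite DiffSB_Sa_iff by lra. split.
  - intros [h [hi [C M]]]. exists h.
    destruct (proj1 (lift_diffeo_1_iff k f h _) (ex_intro _ hi C)) as [Dh E].
    destruct s; split; auto; split; auto.
  - intros [h [[Dh M] E]]. apply (conj Dh) in E. apply lift_diffeo_1_iff in E as [hi C].
    exists h, hi. destruct s; auto.
Qed.

Definition eta (f : L -> L) : (R -> R) * Z := (trace f, sgnZ (exchanges f)).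

Lemma eta_lift h e : h 0 = 0 -> eta (lift h e) = (h, sgnZ e).
Proof. intros H0. unfold eta. rewrite trace_lift, exchanges_lift; auto. Qed.

Lemma eta_comp k f g : Diff k (Sa k 1) (Sa k 1) f -> Diff k (Sa k 1) (Sa k 1) g ->
  eta (compL f g) = (compR (fst (eta f)) (fst (eta g)), (snd (eta f) * snd (eta g))%Z).
Proof.
  intros Df Dg. apply Diff_1_iff in Df as [h1 [e1 [D1 ->]]]. apply Diff_1_iff in Dg as [h2 [e2 [D2 ->]]].
  assert (H1 := Dk_0 _ _ D1). assert (H2 := Dk_0 _ _ D2).
  rewrite lift_comp by eauto using Dk_preserves_nonzero.
  rewrite !eta_lift by (rewrite ?H2; auto). rewrite sgnZ_xorb. reflexivity.
Qed.

Lemma eta_bij k : bij_between eta (Diff k (Sa k 1) (Sa k 1)) (fun hs => Dk k (fst hs) /\ pm1 (snd hs)).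
Proof.
  apply (bij_between_param eta _ _ (fun he => Dk k (fst he))
           (fun he => lift (fst he) (snd he)) (fun he => (fst he, sgnZ (snd he)))).
  - intros f. rewrite Diff_1_iff. split.
    + intros [h [e [Dh ->]]]. exists (h, e). auto.
    + intros [[h e] [Dh ->]]. exists h, e. auto.
  - intros [h s]. simpl. rewrite pm1_sgnZ. split.
    + intros [Dh [e ->]]. exists (h, e). auto.
    + intros [[h' e] [Dh E]]. injection E as -> ->. eauto.
  - intros [h e] Dh. apply eta_lift, (Dk_0 k h Dh).
  - intros [h1 e1] [h2 e2] _ _ E. injection E as -> E. apply sgnZ_inj in E as ->. auto.
Qed.

Lemma eta_bij_DiffSB k s bk : bij_between eta (DiffSB k (Sa k 1) (Sa k 1) s bk)
  (fun hs => Dks k s (fst hs) /\ snd hs = sgnZ (kind_bit bk)).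
Proof.
  apply (bij_between_param eta _ _ (Dks k s)
           (fun h => lift h (kind_bit bk)) (fun h => (h, sgnZ (kind_bit bk)))).
  - intros f. rewrite DiffSB_1_iff. split; intros [h [Dh ->]]; eauto.
  - intros [h z]. simpl. split.
    + intros [Dh ->]. eauto.
    + intros [h' [Dh E]]. injection E as -> ->. auto.
  - intros h [Dh _]. apply eta_lift, (Dk_0 k h Dh).
  - intros h1 h2 _ _ E. injection E as ->. auto.
Qed.

(** * Automorphisms of S_a for a <> 1 *)

(* A decreasing involution, linear on each side of 0, chosen so that w_a ∘ rho and
   rho ∘ w_a^-1 are the linear maps of slopes -sqrt a and -1/sqrt a. *)
Definition rho (a x : R) : R := if Rle_dec x 0 then - x / sqrt a else - (sqrt a * x).

Definition flip (a : R) : L -> L := lift (rho a) true.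

Lemma rho_0 a : rho a 0 = 0.
Proof. unfold rho. destruct (Rle_dec 0 0); [|lra]. unfold Rdiv. ring. Qed.

Lemma rho_rho a x : 0 < a -> rho a (rho a x) = x.
Proof.
  intros Ha. assert (Hs : 0 < sqrt a) by (apply sqrt_lt_R0; auto).
  assert (0 < / sqrt a) by (apply Rinv_0_lt_compat; auto).
  unfold rho, Rdiv. destruct (Rle_dec x 0) as [H1|H1].
  - destruct (Rle_dec (- x * / sqrt a) 0) as [H2|H2]; [|field; lra].
    replace x with 0 by nra. field. lra.
  - destruct (Rle_dec (- (sqrt a * x)) 0) as [H2|H2]; [field; lra|nra].
Qed.

Lemma rho_decreasing a : 0 < a -> strict_decreasing (rho a).
Proof.
  intros Ha x y H. assert (Hs : 0 < sqrt a) by (apply sqrt_lt_R0; auto).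
  assert (0 < / sqrt a) by (apply Rinv_0_lt_compat; auto).
  unfold rho, Rdiv. destruct (Rle_dec x 0), (Rle_dec y 0); nra.
Qed.

Lemma special_Ck_rho k a : 0 < a -> special_Ck k a a (rho a) true.
Proof.
  intros Ha. assert (Hs : 0 < sqrt a) by (apply sqrt_lt_R0; auto).
  assert (Ea := sqrt_sqrt a (Rlt_le _ _ Ha)).
  assert (0 < / sqrt a) by (apply Rinv_0_lt_compat; auto).
  split; [apply rho_0|split].
  - apply CkOn_ext_full with (fun x => (- sqrt a) * x); [apply CkOn_linear, open_true|].
    intros x. unfold rho, Rdiv. destruct (Rle_dec x 0).
    + rewrite w_ge by nra. rewrite <- Ea at 1. field. lra.
    + rewrite w_le by nra. ring.
  - apply CkOn_ext_full with (fun y => (- / sqrt a) * y); [apply CkOn_linear, open_true|].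
    intros y. unfold rho. destruct (Rle_dec y 0).
    + rewrite w_le by auto. destruct (Rle_dec y 0); [|lra]. field. lra.
    + assert (0 < / a) by (apply Rinv_0_lt_compat; auto).
      rewrite w_ge by lra. destruct (Rle_dec (/ a * y) 0); [nra|].
      rewrite <- Ea at 2. field. lra.
Qed.

Lemma flip_DiffSB k a : 0 < a -> DiffSB k (Sa k a) (Sa k a) Minus Ex (flip a).
Proof.
  intros Ha. apply DiffSB_Sa_iff; auto. exists (rho a), (rho a).
  split; [|apply rho_decreasing; auto].
  split; [reflexivity|]. split; [|split; [|split]]; try (intros; apply rho_rho; auto);
    apply special_Ck_rho; auto.
Qed.

Lemma preserves_nonzero_rho a : 0 < a -> preserves_nonzero (rho a).
Proof.
  intros Ha. apply preserves_nonzero_of_inv with (rho a); [intros; apply rho_rho; auto|apply rho_0].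
Qed.

Lemma flip_flip a p : 0 < a -> flip a (flip a p) = p.
Proof.
  intros Ha. apply lift_inv; [intros; apply rho_rho; auto|apply rho_0|apply preserves_nonzero_rho; auto].
Qed.

Lemma flip_Pt0 a : flip a (Pt 0) = Orig2.
Proof. unfold flip. rewrite lift_Pt0; auto. apply rho_0. Qed.

Lemma DiffSB_PlusFix_conj k a f finv n : 0 < a -> Diff k (Sa k a) (Sa k a) f ->
  (forall x, finv (f x) = x) -> (forall x, f (finv x) = x) ->
  DiffSB k (Sa k a) (Sa k a) Plus Fix n -> DiffSB k (Sa k a) (Sa k a) Plus Fix (compL f (compL n finv)).
Proof.
  intros Ha D FI IF Dn. destruct (Diff_DiffSB k a a f Ha Ha D) as [s [bk Df]].
  assert (Di := DiffSB_inv k a a s bk f finv Ha Ha Df FI IF).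
  assert (D1 := DiffSB_comp k a a a s bk Plus Fix finv n Ha Ha Ha Di Dn).
  assert (D2 := DiffSB_comp k a a a _ _ s bk _ f Ha Ha Ha D1 Df).
  destruct s, bk; exact D2.
Qed.

Lemma Ekp_0 k e : Ekp k e -> e 0 = 0.
Proof. intros [[[H0 _] _] _]. exact H0. Qed.

Lemma Ekp_preserves_nonzero k e : Ekp k e -> preserves_nonzero e.
Proof. intros [[D _] _]. apply Dk_preserves_nonzero with k; auto. Qed.

Section Automorphisms.

Variables (k : reg) (a : R).
Hypotheses (hk : valid_reg k) (Ha : 0 < a) (Ha1 : a <> 1).

Local Notation S := (Sa k a).

Lemma auto_not_PlusEx f : ~ DiffSB k S S Plus Ex f.
Proof. intros D. apply Ha1. assert (E := DiffSB_scale_relation k a a _ _ f hk Ha Ha D). simpl in E. nra. Qed.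

Lemma auto_not_MinusFix f : ~ DiffSB k S S Minus Fix f.
Proof. intros D. apply Ha1. assert (E := DiffSB_scale_relation k a a _ _ f hk Ha Ha D). simpl in E. nra. Qed.

Lemma Diff_auto_iff f : Diff k S S f <-> DiffSB k S S Plus Fix f \/ DiffSB k S S Minus Ex f.
Proof.
  split; [|intros [D|D]; apply DiffSB_Diff in D; auto].
  intros D. destruct (Diff_DiffSB k a a f Ha Ha D) as [[] [[] D']]; auto.
  - exfalso; apply (auto_not_PlusEx f); auto.
  - exfalso; apply (auto_not_MinusFix f); auto.
Qed.

Lemma PlusFix_auto_iff f : DiffSB k S S Plus Fix f <-> exists e, Ekp k e /\ f = lift e false.
Proof.
  rewrite DiffSB_Sa_iff by auto. split.
  - intros [h [hi [[E [HK [KH [G Gi]]]] M]]]. exists h. split; auto.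
    split; [split; [split; [apply G|exists hi; repeat split; auto; [apply G|apply Gi]]|exact M]|].
    apply special_Ck_flat with a; auto.
  - intros [e [Ee ->]]. destruct (lift_diffeo_of_Ekp k a e hk Ha Ee) as [einv C].
    exists e, einv. split; auto. exact (proj2 (proj1 Ee)).
Qed.


Lemma MinusEx_auto_iff f :
  DiffSB k S S Minus Ex f <-> DiffSB k S S Plus Fix (compL f (flip a)).
Proof.
  split; intros D.
  - exact (DiffSB_comp k a a a Minus Ex Minus Ex _ _ Ha Ha Ha (flip_DiffSB k a Ha) D).
  - replace f with (compL (compL f (flip a)) (flip a)).
    + exact (DiffSB_comp k a a a Minus Ex Plus Fix _ _ Ha Ha Ha (flip_DiffSB k a Ha) D).
    + apply functional_extensionality. intros p. unfold compL. rewrite flip_flip; auto.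
Qed.

Definition rho_pow (b : bool) (x : R) : R := if b then rho a x else x.

Lemma rho_pow_0 b : rho_pow b 0 = 0.
Proof. destruct b; simpl; auto using rho_0. Qed.

Lemma rho_pow_involutive b x : rho_pow b (rho_pow b x) = x.
Proof. destruct b; simpl; auto using rho_rho. Qed.

Definition auto_of (e : R -> R) (b : bool) : L -> L := lift (fun x => e (rho_pow b x)) b.

Lemma auto_of_comp e1 b1 e2 b2 : Ekp k e1 -> Ekp k e2 ->
  compL (auto_of e1 b1) (auto_of e2 b2) =
  lift (fun x => e1 (rho_pow b1 (e2 (rho_pow b2 x)))) (xorb b1 b2).
Proof.
  intros E1 E2. assert (N : forall e b, Ekp k e -> preserves_nonzero (fun x => e (rho_pow b x))).
  { intros e b Ee x Hx. apply (Ekp_preserves_nonzero k e Ee).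
    destruct b; simpl; auto. apply preserves_nonzero_rho; auto. }
  apply (lift_comp (fun x => e1 (rho_pow b1 x)) b1 (fun x => e2 (rho_pow b2 x)) b2); auto;
    rewrite rho_pow_0; apply Ekp_0 with k; auto.
Qed.

Lemma auto_of_true e : Ekp k e -> auto_of e true = compL (lift e false) (flip a).
Proof.
  intros Ee. unfold flip, auto_of. rewrite lift_comp; auto using rho_0, preserves_nonzero_rho.
  - apply Ekp_0 with k; auto.
  - apply Ekp_preserves_nonzero with k; auto.
Qed.

Lemma compL_flip_flip g : compL (compL g (flip a)) (flip a) = g.
Proof. apply functional_extensionality. intros p. unfold compL. rewrite flip_flip; auto. Qed.

Lemma Diff_auto_repr f : Diff k S S f <-> exists e b, Ekp k e /\ f = auto_of e b.
Proof.
  rewrite Diff_auto_iff, MinusEx_auto_iff, !PlusFix_auto_iff. split.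
  - intros [[e [Ee ->]]|[e [Ee E]]]; [exists e, false; auto|exists e, true; split; auto].
    rewrite auto_of_true, <- E, compL_flip_flip; auto.
  - intros [e [[] [Ee ->]]]; [right|left; exists e; auto].
    exists e. split; auto. rewrite auto_of_true, compL_flip_flip; auto.
Qed.

Definition Psi (f : L -> L) : (R -> R) * Z :=
  (fun x => trace f (rho_pow (exchanges f) x), sgnZ (exchanges f)).

Lemma Psi_lift h b : h 0 = 0 -> Psi (lift h b) = (fun x => h (rho_pow b x), sgnZ b).
Proof. intros H0. unfold Psi. rewrite trace_lift, exchanges_lift; auto. Qed.

Lemma Psi_auto_of e b : Ekp k e -> Psi (auto_of e b) = (e, sgnZ b).
Proof.
  intros Ee. unfold auto_of. rewrite Psi_lift by (rewrite rho_pow_0; apply Ekp_0 with k; auto).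
  f_equal. apply functional_extensionality. intros x. rewrite rho_pow_involutive. auto.
Qed.

Definition sigma (e : R -> R) : R -> R := fun x => rho a (e (rho a x)).

Lemma Psi_comp f g : Diff k S S f -> Diff k S S g ->
  Psi (compL f g) =
  (compR (fst (Psi f)) (if Z.eq_dec (snd (Psi f)) 1%Z then fst (Psi g) else sigma (fst (Psi g))),
   (snd (Psi f) * snd (Psi g))%Z).
Proof.
  intros Df Dg. apply Diff_auto_repr in Df as [e1 [b1 [E1 ->]]].
  apply Diff_auto_repr in Dg as [e2 [b2 [E2 ->]]].
  assert (H0 : e1 (rho_pow b1 (e2 (rho_pow b2 0))) = 0).
  { rewrite rho_pow_0, (Ekp_0 k e2), rho_pow_0; auto. apply Ekp_0 with k; auto. }
  rewrite auto_of_comp, Psi_lift, !Psi_auto_of, sgnZ_xorb by auto.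
  f_equal. unfold compR, sigma. apply functional_extensionality. intros x.
  destruct b1, b2; simpl; rewrite ?rho_rho; auto.
Qed.

Lemma Psi_bij : bij_between Psi (Diff k S S) (fun es => Ekp k (fst es) /\ pm1 (snd es)).
Proof.
  apply (bij_between_param Psi _ _ (fun eb => Ekp k (fst eb))
           (fun eb => auto_of (fst eb) (snd eb)) (fun eb => (fst eb, sgnZ (snd eb)))).
  - intros f. rewrite Diff_auto_repr. split.
    + intros [e [b [Ee ->]]]. exists (e, b). auto.
    + intros [[e b] [Ee ->]]. exists e, b. auto.
  - intros [e z]. simpl. rewrite pm1_sgnZ. split.
    + intros [Ee [b ->]]. exists (e, b). auto.
    + intros [[e' b] [Ee E]]. injection E as -> ->. eauto.
  - intros [e b] Ee. apply Psi_auto_of. auto.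
  - intros [e1 b1] [e2 b2] _ _ E. injection E as -> E. apply sgnZ_inj in E as ->. auto.
Qed.

Lemma sigma_Ekp e : Ekp k e -> Ekp k (sigma e).
Proof.
  intros Ee. assert (Pe : DiffSB k S S Plus Fix (lift e false)) by (apply PlusFix_auto_iff; eauto).
  assert (D := DiffSB_comp k a a a _ _ _ _ _ _ Ha Ha Ha (flip_DiffSB k a Ha) Pe).
  assert (D' := DiffSB_comp k a a a _ _ _ _ _ _ Ha Ha Ha D (flip_DiffSB k a Ha)).
  apply PlusFix_auto_iff in D' as [e' [Ee' E]].
  replace (sigma e) with e'; auto.
  rewrite <- (trace_lift e' false), <- E. apply functional_extensionality. intros x.
  unfold trace, compL, flip, sigma. rewrite !val_lift. auto.
Qed.

Lemma sigma_comp e1 e2 : sigma (compR e1 e2) = compR (sigma e1) (sigma e2).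
Proof.
  unfold sigma, compR. apply functional_extensionality. intros x. rewrite rho_rho; auto.
Qed.

Lemma sigma_involutive e : sigma (sigma e) = e.
Proof.
  unfold sigma. apply functional_extensionality. intros x. rewrite !rho_rho; auto.
Qed.

Lemma trace_comp_PlusFix f g : DiffSB k S S Plus Fix f -> DiffSB k S S Plus Fix g ->
  trace (compL f g) = compR (trace f) (trace g).
Proof.
  intros Df Dg. apply PlusFix_auto_iff in Df as [e1 [_ ->]]. apply PlusFix_auto_iff in Dg as [e2 [_ ->]].
  apply functional_extensionality. intros x. unfold trace, compL, compR. rewrite !val_lift. auto.
Qed.

Lemma trace_bij_PlusFix : bij_between trace (DiffSB k S S Plus Fix) (Ekp k).
Proof.
  apply (bij_between_param trace _ _ (Ekp k) (fun e => lift e false) (fun e => e)).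
  - intros f. apply PlusFix_auto_iff.
  - intros e. split; [eauto|intros [e' [Ee ->]]; auto].
  - intros e _. apply trace_lift.
  - intros e1 e2 _ _ ->. auto.
Qed.

Lemma flip_neq_id : flip a <> (fun x => x).
Proof.
  intros E. assert (E' := f_equal (fun F => F (Pt 0)) E). cbv beta in E'.
  rewrite flip_Pt0 in E'. discriminate.
Qed.

Lemma PlusFix_flip_decomposition f : Diff k S S f ->
  exists n e, DiffSB k S S Plus Fix n /\ (e = (fun x => x) \/ e = flip a) /\ f = compL n e.
Proof.
  intros D. apply Diff_auto_iff in D as [D|D].
  - exists f, (fun x => x). split; auto.
  - exists (compL f (flip a)), (flip a). split; [apply MinusEx_auto_iff; auto|].
    split; auto. symmetry. apply compL_flip_flip.
Qed.

Lemma PlusFix_flip_decomposition_unique n1 e1 n2 e2 :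
  DiffSB k S S Plus Fix n1 -> (e1 = (fun x => x) \/ e1 = flip a) ->
  DiffSB k S S Plus Fix n2 -> (e2 = (fun x => x) \/ e2 = flip a) ->
  compL n1 e1 = compL n2 e2 -> n1 = n2 /\ e1 = e2.
Proof.
  intros [_ [_ [F1 F1']]] He1 [_ [_ [F2 F2']]] He2 E.
  assert (Ee : e1 = e2).
  { assert (E' := f_equal (fun F => F (Pt 0)) E). unfold compL in E'.
    destruct He1 as [-> | ->], He2 as [-> | ->]; auto; rewrite ?flip_Pt0 in E';
      rewrite ?F1, ?F2, ?F1', ?F2' in E'; discriminate. }
  subst e2. split; auto.
  assert (II : forall q, e1 (e1 q) = q)
    by (destruct He1 as [-> | ->]; intros q; [auto|apply flip_flip; auto]).
  apply functional_extensionality. intros q. rewrite <- (II q).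
  exact (f_equal (fun F => F (e1 q)) E).
Qed.

End Automorphisms.

(** * S_a versus S_b for a <> b *)

Lemma special_Ck_opp k a b : 0 < a -> 0 < b -> a * b = 1 -> special_Ck k a b (fun x => - x) false.
Proof.
  intros Ha Hb Hab. assert (Eb : b = / a) by (field_simplify_eq; lra).
  split; [ring|split].
  - apply CkOn_ext_full with (fun x => (-1) * x); [apply CkOn_linear, open_true|intros; ring].
  - apply CkOn_ext_full with (fun y => (- b) * y); [apply CkOn_linear, open_true|].
    intros y. destruct (Rle_dec y 0).
    + rewrite (w_le (/ a) y), w_ge by lra. ring.
    + assert (0 < / a * y) by (apply Rmult_lt_0_compat; [apply Rinv_0_lt_compat|]; lra).
      rewrite (w_ge (/ a) y), w_le by lra. rewrite Eb. ring.
Qed.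

Section InverseScale.

Variables (k : reg) (a : R).
Hypotheses (hk : valid_reg k) (Ha : 0 < a) (Ha1 : a <> 1).

Local Notation S := (Sa k a).
Local Notation T := (Sa k (1 / a)).

Let Hb : 0 < 1 / a.
Proof. apply Rdiv_lt_0_compat; lra. Qed.

Lemma Diff_inv_scale_exists : exists f, Diff k S T f.
Proof.
  exists (lift (fun x => - x) false). apply Diff_Sa_iff; auto.
  exists (fun x => - x), (fun x => - x), false.
  split; [auto|split; [intros; ring|split; [intros; ring|]]].
  split; apply special_Ck_opp; auto; field; lra.
Qed.

Lemma inv_scale_not_PlusFix f : ~ DiffSB k S T Plus Fix f.
Proof.
  intros D. apply Ha1. assert (E := DiffSB_scale_relation k _ _ _ _ f hk Ha Hb D). simpl in E.
  assert (a * a = 1) by (rewrite E at 1; field; lra). nra.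
Qed.

Lemma inv_scale_not_MinusEx f : ~ DiffSB k S T Minus Ex f.
Proof.
  intros D. apply Ha1. assert (E := DiffSB_scale_relation k _ _ _ _ f hk Ha Hb D). simpl in E.
  assert (a * a = 1) by (rewrite E at 1; field; lra). nra.
Qed.

Lemma Diff_inv_scale_iff f : Diff k S T f <-> DiffSB k S T Plus Ex f \/ DiffSB k S T Minus Fix f.
Proof.
  split; [|intros [D|D]; apply DiffSB_Diff in D; auto].
  intros D. destruct (Diff_DiffSB k _ _ f Ha Hb D) as [[] [[] D']]; auto.
  - exfalso; apply (inv_scale_not_PlusFix f); auto.
  - exfalso; apply (inv_scale_not_MinusEx f); auto.
Qed.

Lemma inv_scale_bijections h g ginv :
  DiffSB k S T Minus Fix h -> DiffSB k S T Plus Ex g ->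
  (forall x, ginv (g x) = x) -> (forall x, g (ginv x) = x) ->
  bij_between (fun kappa => compL ginv kappa) (DiffSB k S T Plus Ex) (DiffSB k S S Plus Fix) /\
  bij_between (fun kappa => compL h kappa) (DiffSB k S S Plus Fix) (DiffSB k S T Minus Fix).
Proof.
  intros Dh Dg GI IG. destruct (proj1 Dh) as [hinv [HI [IH _]]].
  assert (Dgi := DiffSB_inv k _ _ Plus Ex g ginv Ha Hb Dg GI IG).
  assert (Dhi := DiffSB_inv k _ _ Minus Fix h hinv Ha Hb Dh HI IH).
  split.
  - apply bij_between_compL with g; auto.
    + intros kap D. exact (DiffSB_comp k _ _ _ Plus Ex Plus Ex _ _ Ha Hb Ha D Dgi).
    + intros n Dn. exact (DiffSB_comp k _ _ _ Plus Fix Plus Ex _ _ Ha Ha Hb Dn Dg).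
  - apply bij_between_compL with hinv; auto.
    + intros kap D. exact (DiffSB_comp k _ _ _ Plus Fix Minus Fix _ _ Ha Ha Hb D Dh).
    + intros m Dm. exact (DiffSB_comp k _ _ _ Minus Fix Minus Fix _ _ Ha Hb Ha Dm Dhi).
Qed.

End InverseScale.

Theorem Diff_Sa_empty k a b : valid_reg k -> 0 < a -> 0 < b -> a <> b -> a <> 1 / b ->
  forall f, ~ Diff k (Sa k a) (Sa k b) f.
Proof.
  intros V Ha Hb Hne Hinv f D.
  destruct (Diff_DiffSB k a b f Ha Hb D) as [s [bk D']].
  assert (E := DiffSB_scale_relation k a b s bk f V Ha Hb D').
  destruct s, bk; simpl in E; auto; apply Hinv; field_simplify_eq; lra.
Qed.

Lemma uncountably_many_structures k : valid_reg k ->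
  exists F : R -> (chart -> Prop),
    (forall x, is_structure k (F x)) /\ (forall x y, x <> y -> forall f, ~ Diff k (F x) (F y) f).
Proof.
  intros V. exists (fun x => Sa k (2 + exp x)).
  assert (P : forall x, 0 < 2 + exp x) by (intros x; assert (0 < exp x) by apply exp_pos; lra).
  split.
  - intros x. exists (special_atlas (w (2 + exp x))). split; [apply special_atlas_w, P|reflexivity].
  - intros x y Hxy f. apply Diff_Sa_empty; auto.
    + intros E. apply Hxy, exp_inv. lra.
    + assert (0 < exp x) by apply exp_pos. assert (0 < exp y) by apply exp_pos.
      intros E. assert (1 / (2 + exp y) < 1) by (apply (Rmult_lt_reg_r (2 + exp y)); [auto|field_simplify; lra]).
      lra.
Qed.

Theorem theorem1p7 (k : reg) (hk : valid_reg k) :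
  (* (1) a = 1 *)
  (exists eta : (L -> L) -> (R -> R) * Z,
     (forall f g, Diff k (Sa k 1) (Sa k 1) f -> Diff k (Sa k 1) (Sa k 1) g ->
        eta (compL f g) =
        (compR (fst (eta f)) (fst (eta g)), (snd (eta f) * snd (eta g))%Z)) /\
     bij_between eta (Diff k (Sa k 1) (Sa k 1))
       (fun hs => Dk k (fst hs) /\ pm1 (snd hs)) /\
     (forall s : sgn,
        bij_between eta (DiffSB k (Sa k 1) (Sa k 1) s Fix)
          (fun hs => Dks k s (fst hs) /\ snd hs = 1%Z) /\
        bij_between eta (DiffSB k (Sa k 1) (Sa k 1) s Ex)
          (fun hs => Dks k s (fst hs) /\ snd hs = (-1)%Z))) /\
  (* (2) a <> 1 : automorphisms *)
  (forall a, 0 < a -> a <> 1 ->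
     let S := Sa k a in
     (forall f, ~ DiffSB k S S Plus Ex f) /\
     (forall f, ~ DiffSB k S S Minus Fix f) /\
     (forall f, Diff k S S f <-> DiffSB k S S Plus Fix f \/ DiffSB k S S Minus Ex f) /\
     (forall f, ~ (DiffSB k S S Plus Fix f /\ DiffSB k S S Minus Ex f)) /\
     (exists phi : (L -> L) -> (R -> R),
        (forall f g, DiffSB k S S Plus Fix f -> DiffSB k S S Plus Fix g ->
           phi (compL f g) = compR (phi f) (phi g)) /\
        bij_between phi (DiffSB k S S Plus Fix) (Ekp k)) /\
     (exists p : L -> L,
        DiffSB k S S Minus Ex p /\
        (forall x, p (p x) = x) /\ p <> (fun x => x) /\
        (* Diff^{+,fix}(S) is normal in Diff(S) *)
        (forall f finv n, Diff k S S f ->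
           (forall x, finv (f x) = x) -> (forall x, f (finv x) = x) ->
           DiffSB k S S Plus Fix n -> DiffSB k S S Plus Fix (compL f (compL n finv))) /\
        (* <p> is a complement: Diff(S) = Diff^{+,fix}(S) ⋊ <p> *)
        (forall f, Diff k S S f ->
           exists n e, DiffSB k S S Plus Fix n /\ (e = (fun x => x) \/ e = p) /\
                       f = compL n e) /\
        (forall n1 e1 n2 e2,
           DiffSB k S S Plus Fix n1 -> (e1 = (fun x => x) \/ e1 = p) ->
           DiffSB k S S Plus Fix n2 -> (e2 = (fun x => x) \/ e2 = p) ->
           compL n1 e1 = compL n2 e2 -> n1 = n2 /\ e1 = e2)) /\
     (* Diff(S) is isomorphic to a semidirect product E^{k,+} ⋊_sigma Z_2 *)
     (exists (sigma : (R -> R) -> (R -> R)) (Psi : (L -> L) -> (R -> R) * Z),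
        (forall e, Ekp k e -> Ekp k (sigma e)) /\
        (forall e1 e2, Ekp k e1 -> Ekp k e2 ->
           sigma (compR e1 e2) = compR (sigma e1) (sigma e2)) /\
        (forall e, Ekp k e -> sigma (sigma e) = e) /\
        (forall f g, Diff k S S f -> Diff k S S g ->
           Psi (compL f g) =
           (compR (fst (Psi f))
              (if Z.eq_dec (snd (Psi f)) 1%Z then fst (Psi g) else sigma (fst (Psi g))),
            (snd (Psi f) * snd (Psi g))%Z)) /\
        bij_between Psi (Diff k S S) (fun es => Ekp k (fst es) /\ pm1 (snd es)))) /\
  (* (3) S_a vs S_{1/a} *)
  (forall a, 0 < a -> a <> 1 ->
     let S := Sa k a in let T := Sa k (1 / a) in
     (exists f, Diff k S T f) /\
     (forall f, ~ DiffSB k S T Plus Fix f) /\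
     (forall f, ~ DiffSB k S T Minus Ex f) /\
     (forall f, Diff k S T f <-> DiffSB k S T Plus Ex f \/ DiffSB k S T Minus Fix f) /\
     (forall f, ~ (DiffSB k S T Plus Ex f /\ DiffSB k S T Minus Fix f)) /\
     (forall h g ginv,
        DiffSB k S T Minus Fix h -> DiffSB k S T Plus Ex g ->
        (forall x, ginv (g x) = x) -> (forall x, g (ginv x) = x) ->
        bij_between (fun kappa => compL ginv kappa)
          (DiffSB k S T Plus Ex) (DiffSB k S S Plus Fix) /\
        bij_between (fun kappa => compL h kappa)
          (DiffSB k S S Plus Fix) (DiffSB k S T Minus Fix))) /\
  (* (4) *)
  (forall a b, 0 < a -> 0 < b -> a <> b -> a <> 1 / b ->
     forall f, ~ Diff k (Sa k a) (Sa k b) f) /\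
  (* uncountably many pairwise non-diffeomorphic C^k-structures *)
  (exists F : R -> (chart -> Prop),
     (forall x, is_structure k (F x)) /\
     (forall x y, x <> y -> forall f, ~ Diff k (F x) (F y) f)).
Proof.
  split.
  { exists eta. split; [intros f g; apply eta_comp|split; [apply eta_bij|]].
    intros s. exact (conj (eta_bij_DiffSB k s Fix) (eta_bij_DiffSB k s Ex)). }
  split.
  { intros a Ha Ha1 S.
    split; [apply auto_not_PlusEx; auto|]. split; [apply auto_not_MinusFix; auto|].
    split; [apply Diff_auto_iff; auto|]. split; [intros f; apply DiffSB_fix_ex_disjoint|].
    split; [exists trace; split; [apply trace_comp_PlusFix|apply trace_bij_PlusFix]; auto|].
    split.
    - exists (flip a). split; [apply flip_DiffSB; auto|]. split; [intros; apply flip_flip; auto|].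
      split; [apply flip_neq_id|]. split; [intros; apply DiffSB_PlusFix_conj; auto|].
      split; [apply PlusFix_flip_decomposition|apply PlusFix_flip_decomposition_unique]; auto.
    - exists (sigma a), (Psi a).
      split; [apply sigma_Ekp; auto|]. split; [intros; apply sigma_comp; auto|].
      split; [intros; apply sigma_involutive; auto|].
      split; [apply Psi_comp|apply Psi_bij]; auto. }
  split.
  { intros a Ha Ha1 S T.
    split; [apply Diff_inv_scale_exists; auto|]. split; [apply inv_scale_not_PlusFix; auto|].
    split; [apply inv_scale_not_MinusEx; auto|]. split; [apply Diff_inv_scale_iff; auto|].
    split; [intros f [D1 D2]; apply (DiffSB_fix_ex_disjoint k S T Minus Plus f); auto|].
    intros h g ginv; apply inv_scale_bijections; auto. }
  split; [intros; apply Diff_Sa_empty; auto|apply uncountably_many_structures; auto].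
Qed.
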